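(* Consider the VRD$^2$ algorithm with constant step-size $\mu>0$, as defined in the context, under the standing assumptions listed there. There exists $\bar\mu>0$ such that for every $0<\mu\le\bar\mu$ there is a constant $C<\infty$ (independent of $i$) with $$\mathbb{E}\,\|w_{i,k}-w^\star_k\|^2\le\rho^iC\qquad\text{for all agents }k\text{ and all }i>0,$$ where $w^\star=\mathrm{col}\{w^\star_1,\dots,w^\star_K\}$ is the minimizer of $R$ and $$\rho=\max\Big(1-\frac{1-\lambda}{2N},\;1-\frac{\mu\nu}{4}\Big).$$
   Context: Data and risk. There are $N$ data pairs $(h_n,\gamma_n)$, $n=1,\dots,N$, with $h_n\in\mathbb{R}^M$ and scalar labels $\gamma_n$. The feature vector and the parameter are partitioned into $K$ blocks, $h_n=\mathrm{col}\{h_{n,1},\dots,h_{n,K}\}$, $w=\mathrm{col}\{w_1,\dots,w_K\}$ with $h_{n,k},w_k\in\mathbb{R}^{M_k}$, $\sum_k M_k=M$; block $k$ is held by agent $k$. The empirical risk is $$R(w)=\frac1N\sum_{n=1}^N Q\Big(\sum_{k=1}^K h_{n,k}^{\mathsf T}w_k;\gamma_n\Big)+\sum_{k=1}^K r_k(w_k),$$ where $Q(\cdot;\gamma):\mathbb{R}\to\mathbb{R}$ is differentiable with derivative $\nabla_z Q(z;\gamma)$, and $r(w)=\sum_k r_k(w_k)$. Assumptions. (i) For every $n$, the map $w\mapsto Q(h_n^{\mathsf T}w;\gamma_n)$ has $L$-Lipschitz gradient, i.e. $\|\nabla_zQ(h_n^{\mathsf T}w_1;\gamma_n)h_n-\nabla_zQ(h_n^{\mathsf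 T}w_2;\gamma_n)h_n\|\le L\|w_1-w_2\|$, and $|\nabla_zQ(z_1;\gamma_n)-\nabla_zQ(z_2;\gamma_n)|\le\delta|z_1-z_2|$ for all $z_1,z_2$, with $L,\delta>0$. (ii) $r$ is convex with $\eta$-Lipschitz gradient. (iii) $R$ is $\nu$-strongly convex: $(\nabla R(w_1)-\nabla R(w_2))^{\mathsf T}(w_1-w_2)\ge\nu\|w_1-w_2\|^2$; $w^\star$ denotes its unique minimizer. (iv) Agents communicate over a strongly connected graph with combination matrix $A=[a_{\ell k}]\in\mathbb{R}^{K\times K}$, nonnegative, with $a_{\ell k}>0$ only if $\ell=k$ or $\ell$ is a neighbor of $k$ ($\ell\in\mathcal N_k$, where $\mathcal N_k$ includes $k$), $A=A^{\mathsf T}$, $A\mathbf 1_K=\mathbf 1_K$, and $a_{kk}>0$ for at least one $k$. $\lambda\in(0,1)$ denotes the second largest magnitude of the eigenvalues of $A$. VRD$^2$ algorithm (variance-reduced dynamic diffusion). Each agent $k$ stores $w_{i,k}$ and scalar tables $u^i_{n,k},v^i_{n,k}$, $n=1,\dots,N$, initialized $w_{1,k}=0$, $u^1_{n,k}=v^1_{n,k}=0$. At each iteration $i=1,2,\dots$ an index $n_i$ is drawn uniformly from $\{1,\dots,N\}$, independently of the past, and the same $n_i$ is used by all agents. Agent $k$ computes $$z_{n_i,k}=\sum_{\ell\in\mathcal N_k}a_{\ell k}\big(u^i_{n_i,\ell}+Kh_{n_i,\ell}^{\mathsf T}w_{i,\ell}-v^i_{n_i,\ell}\big),$$ $$w_{i+1,k}=w_{i,k}-\mu\Big\{\big[\nabla_zQ(z_{n_i,k};\gamma_{n_i})-\nabla_zQ(u^i_{n_i,k};\gamma_{n_i})\big]h_{n_i,k}+\frac1N\sum_{n=1}^N\nabla_zQ(u^i_{n,k};\gamma_n)h_{n,k}+\nabla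 r_k(w_{i,k})\Big\},$$ then sets $u^{i+1}_{n_i,k}=z_{n_i,k}$, $v^{i+1}_{n_i,k}=Kh_{n_i,k}^{\mathsf T}w_{i,k}$, and $u^{i+1}_{n,k}=u^i_{n,k}$, $v^{i+1}_{n,k}=v^i_{n,k}$ for $n\ne n_i$. (This is the PVRD$^2$ algorithm with pipeline depth $J=1$.) *)

From Stdlib Require Import Reals Lra Lia Arith.
Open Scope R_scope.

(* Conventions: all indices are 0-based.  Data index n ranges over 0..N-1,
   agents/blocks k over 0..K-1, coordinates j of block k over 0..M k - 1.
   A block vector w in R^M = col{w_1,...,w_K} is represented as
   w : nat -> nat -> R with w k j the j-th coordinate of block k;
   only coordinates k < K, j < M k are meaningful. *)

Fixpoint fsum (n : nat) (f : nat -> R) : R :=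
  match n with
  | O => 0
  | S m => fsum m f + f m
  end.

Definition vec := nat -> R.
Definition bvec := nat -> nat -> R.

Definition dotb (m : nat) (x y : vec) : R := fsum m (fun j => x j * y j).

Definition dotf (K : nat) (M : nat -> nat) (x y : bvec) : R :=
  fsum K (fun k => dotb (M k) (x k) (y k)).

Definition normf (K : nat) (M : nat -> nat) (x : bvec) : R := sqrt (dotf K M x x).

Definition bsub (x y : bvec) : bvec := fun k j => x k j - y k j.

Definition blocksq (m : nat) (x y : vec) : R :=
  fsum m (fun j => (x j - y j) * (x j - y j)).

Definition hTw (K : nat) (M : nat -> nat) (hn : bvec) (w : bvec) : R := dotf K M hn w.

Definition rfull (K : nat) (r : nat -> vec -> R) (w : bvec) : R :=
  fsum K (fun k => r k (w k)).

Definition Rrisk (N K : nat) (M : nat -> nat) (h : nat -> bvec) (gam : nat -> R)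
  (Q : R -> R -> R) (r : nat -> vec -> R) (w : bvec) : R :=
  / INR N * fsum N (fun n => Q (hTw K M (h n) w) (gam n)) + rfull K r w.

Definition gradR (N K : nat) (M : nat -> nat) (h : nat -> bvec) (gam : nat -> R)
  (dQ : R -> R -> R) (gr : nat -> vec -> vec) (w : bvec) : bvec :=
  fun k j => / INR N * fsum N (fun n => dQ (hTw K M (h n) w) (gam n) * h n k j)
             + gr k (w k) j.

Definition is_block_gradient (m : nat) (f : vec -> R) (g : vec -> vec) : Prop :=
  forall x d : vec,
    derivable_pt_lim (fun t => f (fun j => x j + t * d j)) 0 (dotb m (g x) d).

Inductive reach_in (K : nat) (E : nat -> nat -> Prop) : nat -> nat -> Prop :=
  | reach_refl : forall x, reach_in K E x x
  | reach_step : forall x y z, (y < K)%nat -> E x y -> reach_in K E y z ->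
                 reach_in K E x z.

Definition strongly_connected (K : nat) (E : nat -> nat -> Prop) : Prop :=
  forall k l, (k < K)%nat -> (l < K)%nat -> reach_in K E k l.

Definition orth_eigenbasis (K : nat) (A : nat -> nat -> R)
  (V : nat -> nat -> R) (e : nat -> R) : Prop :=
  (forall i l, (i < K)%nat -> (l < K)%nat ->
     fsum K (fun k => A l k * V i k) = e i * V i l) /\
  (forall i i', (i < K)%nat -> (i' < K)%nat ->
     fsum K (fun l => V i l * V i' l) = if Nat.eqb i i' then 1 else 0).

(* lam is the second largest magnitude of the eigenvalues (counted with
   multiplicity) of the symmetric K x K matrix A: listing the eigenvalues
   e_0..e_{K-1} of an orthonormal eigen-decomposition, and removing one
   eigenvalue e_p of largest magnitude, lam is the largest magnitude among
   the remaining ones. *)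
Definition second_largest_eig_mag (K : nat) (A : nat -> nat -> R) (lam : R) : Prop :=
  exists (V : nat -> nat -> R) (e : nat -> R) (p : nat),
    orth_eigenbasis K A V e /\ (p < K)%nat /\
    (forall i, (i < K)%nat -> Rabs (e i) <= Rabs (e p)) /\
    (exists q, (q < K)%nat /\ q <> p /\ Rabs (e q) = lam) /\
    (forall i, (i < K)%nat -> i <> p -> Rabs (e i) <= lam).

Record vrd_state := mkState {
  st_w : bvec;
  st_u : nat -> nat -> R;      (* u^i_{n,k} = st_u n k *)
  st_v : nat -> nat -> R       (* v^i_{n,k} = st_v n k *)
}.

Definition vrd_init : vrd_state :=
  mkState (fun _ _ => 0) (fun _ _ => 0) (fun _ _ => 0).

(* One iteration with sampled index n = n_i.  Since a_{lk} = 0 for l not in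
   N_k, the sum over N_k equals the sum over all l < K. *)
Definition vrd_step (N K : nat) (M : nat -> nat) (A : nat -> nat -> R)
  (h : nat -> bvec) (gam : nat -> R) (dQ : R -> R -> R)
  (gr : nat -> vec -> vec) (mu : R) (x : vrd_state) (n : nat) : vrd_state :=
  let z := fun k => fsum K (fun l =>
             A l k * (st_u x n l + INR K * dotb (M l) (h n l) (st_w x l)
                      - st_v x n l)) in
  mkState
    (fun k j => st_w x k j - mu *
        ((dQ (z k) (gam n) - dQ (st_u x n k) (gam n)) * h n k j
         + / INR N * fsum N (fun n' => dQ (st_u x n' k) (gam n') * h n' k j)
         + gr k (st_w x k) j))
    (fun n' k => if Nat.eqb n' n then z k else st_u x n' k)
    (fun n' k => if Nat.eqb n' n then INR K * dotb (M k) (h n k) (st_w x k)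
                 else st_v x n' k).

(* vrd_iter m s = state after m iterations, i.e. (w_{m+1}, u^{m+1}, v^{m+1}),
   when the sampled indices are n_1 = s 1, ..., n_m = s m. *)
Fixpoint vrd_iter (N K : nat) (M : nat -> nat) (A : nat -> nat -> R)
  (h : nat -> bvec) (gam : nat -> R) (dQ : R -> R -> R)
  (gr : nat -> vec -> vec) (mu : R) (m : nat) (s : nat -> nat) : vrd_state :=
  match m with
  | O => vrd_init
  | S m' => vrd_step N K M A h gam dQ gr mu
              (vrd_iter N K M A h gam dQ gr mu m' s) (s (S m'))
  end.

Definition upd (s : nat -> nat) (p n : nat) : nat -> nat :=
  fun j => if Nat.eqb j p then n else s j.

(* expect N m F = E[F(n_1,...,n_m)] where n_1,...,n_m are i.i.d. uniform on
   {0,...,N-1}; F must only depend on s 1, ..., s m. *)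
Fixpoint expect (N : nat) (m : nat) (F : (nat -> nat) -> R) : R :=
  match m with
  | O => F (fun _ => O)
  | S m' => / INR N * fsum N (fun n => expect N m' (fun s => F (upd s (S m') n)))
  end.

(* The proof is a Lyapunov argument.  Besides the distance [||w - w*||^2], the
   state of VRD^2 carries three error terms: the disagreement of the tables
   [u_n] across agents, the lag [K h_n^T w - v_n] of the tables [v_n], and the
   distance of [u_n] to [h_n^T w*].  Since the tables keep [sum_k u_{n,k} =
   sum_k v_{n,k}], the deviation of the diffused estimate [z_n] from [h_n^T w]
   is [A] applied to a zero-mean vector, so it shrinks by [lam^2].  A
   weighted sum [V] of the four errors then satisfies [E V_{i+1} <= rho V_i]
   for small [mu]: strong convexity contracts the distance at rate [1 - mu nu],
   each table entry is refreshed with probability [1/N], and the coupling terms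
   are of order [mu]. *)

From Stdlib Require Import Reals Lra Lia Psatz FunctionalExtensionality.
From mathcomp Require all_boot all_algebra Rstruct.
Open Scope R_scope.

Lemma fsum_ext n f g : (forall i, (i < n)%nat -> f i = g i) -> fsum n f = fsum n g.
Proof.
  induction n as [|n IH]; intros H; simpl; [reflexivity|].
  rewrite IH, H; [reflexivity|lia|intros; apply H; lia].
Qed.

Lemma fsum_add n f g : fsum n (fun i => f i + g i) = fsum n f + fsum n g.
Proof. induction n; simpl; [lra|]. rewrite IHn; ring. Qed.

Lemma fsum_sub n f g : fsum n (fun i => f i - g i) = fsum n f - fsum n g.
Proof. induction n; simpl; [lra|]. rewrite IHn; ring. Qed.

Lemma fsum_scal n c f : fsum n (fun i => c * f i) = c * fsum n f.
Proof. induction n; simpl; [lra|]. rewrite IHn; ring. Qed.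

Lemma fsum_scalr n c f : fsum n (fun i => f i * c) = fsum n f * c.
Proof. induction n; simpl; [lra|]. rewrite IHn; ring. Qed.

Lemma fsum_const n c : fsum n (fun _ => c) = INR n * c.
Proof. induction n; simpl fsum; [simpl; lra|]. rewrite IHn, S_INR; ring. Qed.

Lemma fsum_zero n : fsum n (fun _ => 0) = 0.
Proof. rewrite fsum_const. ring. Qed.

Lemma fsum_le n f g : (forall i, (i < n)%nat -> f i <= g i) -> fsum n f <= fsum n g.
Proof.
  induction n as [|n IH]; intros H; simpl; [lra|].
  apply Rplus_le_compat; [apply IH; intros|]; apply H; lia.
Qed.

Lemma fsum_nonneg n f : (forall i, (i < n)%nat -> 0 <= f i) -> 0 <= fsum n f.
Proof.
  intros H. rewrite <- (fsum_zero n). now apply fsum_le.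
Qed.

Lemma fsum_swap n m (f : nat -> nat -> R) :
  fsum n (fun i => fsum m (f i)) = fsum m (fun j => fsum n (fun i => f i j)).
Proof.
  induction n; simpl.
  - symmetry. apply fsum_zero.
  - rewrite IHn, <- fsum_add. reflexivity.
Qed.

Lemma fsum_term_le n f p : (p < n)%nat -> (forall i, (i < n)%nat -> 0 <= f i) ->
  f p <= fsum n f.
Proof.
  induction n as [|n IH]; intros Hp H; [lia|]. simpl.
  assert (0 <= f n) by (apply H; lia).
  destruct (Nat.eq_dec p n) as [->|].
  - assert (0 <= fsum n f) by (apply fsum_nonneg; intros; apply H; lia). lra.
  - assert (f p <= fsum n f) by (apply IH; [lia|intros; apply H; lia]). lra.
Qed.

Lemma fsum_update n f a p : (p < n)%nat ->
  fsum n (fun i => if Nat.eqb i p then a else f i) = fsum n f - f p + a.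
Proof.
  induction n as [|n IH]; intros Hp; [lia|]. simpl.
  destruct (Nat.eq_dec p n) as [->|].
  - rewrite Nat.eqb_refl, (fsum_ext n _ f); [ring|].
    intros i Hi. destruct (Nat.eqb_spec i n); [lia|reflexivity].
  - rewrite IH by lia. destruct (Nat.eqb_spec n p); [lia|ring].
Qed.

Lemma fsum_delta n f p : (p < n)%nat ->
  fsum n (fun i => f i * (if Nat.eqb i p then 1 else 0)) = f p.
Proof.
  intros Hp. rewrite (fsum_ext n _ (fun i => if Nat.eqb i p then f p else 0 * f i)).
  - rewrite fsum_update, fsum_scal by exact Hp. ring.
  - intros i _. destruct (Nat.eqb_spec i p) as [->|]; ring.
Qed.

Lemma fsum_nonneg_eq0 n f : (forall i, (i < n)%nat -> 0 <= f i) -> fsum n f = 0 ->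
  forall p, (p < n)%nat -> f p = 0.
Proof.
  intros H H0 p Hp. pose proof (fsum_term_le n f p Hp H). pose proof (H p Hp). lra.
Qed.

Lemma fsum_mul n f g :
  fsum n f * fsum n g = fsum n (fun i => fsum n (fun i' => f i * g i')).
Proof.
  rewrite <- fsum_scalr. apply fsum_ext; intros. rewrite <- fsum_scal. reflexivity.
Qed.

Lemma fsum_sq_nonneg n f : 0 <= fsum n (fun i => f i * f i).
Proof. apply fsum_nonneg; intros; apply Rle_0_sqr. Qed.

Definition bsum (K : nat) (M : nat -> nat) (F : nat -> nat -> R) : R :=
  fsum K (fun k => fsum (M k) (F k)).

Lemma bsum_ext K M F G : (forall k j, (k < K)%nat -> (j < M k)%nat -> F k j = G k j) ->
  bsum K M F = bsum K M G.
Proof. intros H. apply fsum_ext; intros k Hk. apply fsum_ext; auto. Qed.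

Lemma bsum_add K M F G : bsum K M (fun k j => F k j + G k j) = bsum K M F + bsum K M G.
Proof. unfold bsum. rewrite <- fsum_add. apply fsum_ext; intros. apply fsum_add. Qed.

Lemma bsum_sub K M F G : bsum K M (fun k j => F k j - G k j) = bsum K M F - bsum K M G.
Proof. unfold bsum. rewrite <- fsum_sub. apply fsum_ext; intros. apply fsum_sub. Qed.

Lemma bsum_scal K M c F : bsum K M (fun k j => c * F k j) = c * bsum K M F.
Proof. unfold bsum. rewrite <- fsum_scal. apply fsum_ext; intros. apply fsum_scal. Qed.

Lemma bsum_le K M F G : (forall k j, (k < K)%nat -> (j < M k)%nat -> F k j <= G k j) ->
  bsum K M F <= bsum K M G.
Proof. intros H. apply fsum_le; intros k Hk. apply fsum_le; auto. Qed.

Lemma bsum_fsum_swap K M n (F : nat -> nat -> nat -> R) :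
  bsum K M (fun k j => fsum n (fun i => F i k j)) = fsum n (fun i => bsum K M (F i)).
Proof. unfold bsum. rewrite fsum_swap. apply fsum_ext; intros. apply fsum_swap. Qed.

Lemma dotf_bsum K M x y : dotf K M x y = bsum K M (fun k j => x k j * y k j).
Proof. reflexivity. Qed.

Lemma dotb_self_nonneg m a : 0 <= dotb m a a.
Proof. apply fsum_sq_nonneg. Qed.

Lemma dotf_self_nonneg K M a : 0 <= dotf K M a a.
Proof. apply fsum_nonneg; intros; apply dotb_self_nonneg. Qed.

Lemma dotb_le_dotf K M a k : (k < K)%nat -> dotb (M k) (a k) (a k) <= dotf K M a a.
Proof.
  intros Hk. apply (fsum_term_le K (fun k => dotb (M k) (a k) (a k))); auto.
  intros; apply dotb_self_nonneg.
Qed.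

Lemma quadratic_nonneg_discr a b c : 0 <= a ->
  (forall t, 0 <= a * t * t - 2 * b * t + c) -> b * b <= a * c.
Proof.
  intros Ha H. destruct (Req_dec a 0) as [->|Ha0].
  - destruct (Req_dec b 0) as [->|Hb]; [lra|].
    specialize (H ((c + 1) / (2 * b))).
    replace (0 * ((c + 1) / (2 * b)) * ((c + 1) / (2 * b)) - 2 * b * ((c + 1) / (2 * b)) + c)
      with (-1) in H by (field; exact Hb). lra.
  - specialize (H (b / a)).
    replace (a * (b / a) * (b / a) - 2 * b * (b / a) + c) with ((a * c - b * b) / a) in H
      by (field; exact Ha0).
    assert (0 < a) by lra.
    apply Rmult_le_reg_r with (/ a); [now apply Rinv_0_lt_compat|]. unfold Rdiv in H. lra.
Qed.

Lemma fsum_cauchy_schwarz n x y :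
  fsum n (fun i => x i * y i) * fsum n (fun i => x i * y i)
  <= fsum n (fun i => x i * x i) * fsum n (fun i => y i * y i).
Proof.
  apply quadratic_nonneg_discr; [apply fsum_sq_nonneg|]. intros t.
  replace (_ * t * t - _ + _) with (fsum n (fun i => (t * x i - y i) * (t * x i - y i)))
    by (induction n; simpl; [ring|]; rewrite IHn; ring).
  apply fsum_sq_nonneg.
Qed.

Lemma dotf_cauchy_schwarz K M x y :
  dotf K M x y * dotf K M x y <= dotf K M x x * dotf K M y y.
Proof.
  apply quadratic_nonneg_discr; [apply dotf_self_nonneg|]. intros t.
  replace (_ * t * t - _ + _)
    with (bsum K M (fun k j => (t * x k j - y k j) * (t * x k j - y k j))).
  - apply fsum_nonneg; intros; apply fsum_sq_nonneg.
  - rewrite !dotf_bsum, (bsum_ext K M _ (fun k j =>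
      t * t * (x k j * x k j) - 2 * t * (x k j * y k j) + y k j * y k j)) by (intros; ring).
    rewrite bsum_add, bsum_sub, !bsum_scal. ring.
Qed.

Lemma fsum_sq_le n f : fsum n f * fsum n f <= INR n * fsum n (fun i => f i * f i).
Proof.
  pose proof (fsum_cauchy_schwarz n f (fun _ => 1)) as H. cbv beta in H.
  rewrite (fsum_ext n (fun i => f i * 1) f), fsum_const in H by (intros; ring). lra.
Qed.

Definition avg (n : nat) (f : nat -> R) : R := / INR n * fsum n f.

Section Average.
Variable n : nat.
Hypothesis n_pos : (0 < n)%nat.

Lemma avg_ext f g : (forall i, (i < n)%nat -> f i = g i) -> avg n f = avg n g.
Proof. intros H. unfold avg. now rewrite (fsum_ext n f g H). Qed.

Lemma avg_le f g : (forall i, (i < n)%nat -> f i <= g i) -> avg n f <= avg n g.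
Proof.
  intros H. apply Rmult_le_compat_l; [apply Rlt_le, Rinv_0_lt_compat, (lt_0_INR n n_pos)|].
  now apply fsum_le.
Qed.

Lemma avg_nonneg f : (forall i, (i < n)%nat -> 0 <= f i) -> 0 <= avg n f.
Proof.
  intros H. apply Rmult_le_pos; [apply Rlt_le, Rinv_0_lt_compat, (lt_0_INR n n_pos)|].
  now apply fsum_nonneg.
Qed.

Lemma avg_add f g : avg n (fun i => f i + g i) = avg n f + avg n g.
Proof. unfold avg. rewrite fsum_add. ring. Qed.

Lemma avg_sub f g : avg n (fun i => f i - g i) = avg n f - avg n g.
Proof. unfold avg. rewrite fsum_sub. ring. Qed.

Lemma avg_scal c f : avg n (fun i => c * f i) = c * avg n f.
Proof. unfold avg. rewrite fsum_scal. ring. Qed.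

Lemma avg_const c : avg n (fun _ => c) = c.
Proof. unfold avg. rewrite fsum_const. field. apply Rgt_not_eq, (lt_0_INR n n_pos). Qed.

Lemma avg_sq_le f : avg n f * avg n f <= avg n (fun i => f i * f i).
Proof.
  pose proof (lt_0_INR n n_pos) as Hn. pose proof (fsum_sq_le n f). unfold avg.
  replace (/ INR n * fsum n f * (/ INR n * fsum n f))
    with (/ INR n * / INR n * (fsum n f * fsum n f)) by ring.
  replace (/ INR n * fsum n (fun i => f i * f i))
    with (/ INR n * / INR n * (INR n * fsum n (fun i => f i * f i))) by (field; lra).
  apply Rmult_le_compat_l; [|assumption].
  apply Rmult_le_pos; left; now apply Rinv_0_lt_compat.
Qed.

End Average.

Lemma bsum_avg K M n (F : nat -> nat -> nat -> R) :
  bsum K M (fun k j => avg n (fun i => F i k j)) = avg n (fun i => bsum K M (F i)).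
Proof. unfold avg. rewrite bsum_scal, bsum_fsum_swap. reflexivity. Qed.

Lemma fsum_sq_centered_le n y : (0 < n)%nat ->
  fsum n (fun i => (y i - avg n y) * (y i - avg n y)) <= fsum n (fun i => y i * y i).
Proof.
  intros Hn. set (m := avg n y).
  assert (Hs : fsum n y = INR n * m) by (unfold m, avg; field; apply not_0_INR; lia).
  rewrite (fsum_ext n _ (fun i => y i * y i - 2 * m * y i + m * m)) by (intros; ring).
  rewrite fsum_add, fsum_sub, fsum_scal, fsum_const, Hs.
  pose proof (pos_INR n). pose proof (Rle_0_sqr m). unfold Rsqr in *. nra.
Qed.

Lemma sq_add_le_young a b e : 0 < e ->
  (a + b) * (a + b) <= (1 + e) * (a * a) + (1 + / e) * (b * b).
Proof.
  intros He.
  assert (0 <= (e * a - b) * (e * a - b) / e)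
    by (apply Rmult_le_pos; [apply Rle_0_sqr|left; now apply Rinv_0_lt_compat]).
  replace ((1 + e) * (a * a) + (1 + / e) * (b * b))
    with ((a + b) * (a + b) + (e * a - b) * (e * a - b) / e) by (field; lra).
  lra.
Qed.

Lemma fsum_sq_add_le_young n a b e : 0 < e ->
  fsum n (fun i => (a i + b i) * (a i + b i))
  <= (1 + e) * fsum n (fun i => a i * a i) + (1 + / e) * fsum n (fun i => b i * b i).
Proof.
  intros He. rewrite <- !fsum_scal, <- fsum_add.
  apply fsum_le; intros; now apply sq_add_le_young.
Qed.

Lemma mul2_le_young a b e : 0 < e -> -2 * (a * b) <= e * (a * a) + / e * (b * b).
Proof.
  intros He.
  assert (0 <= (e * a + b) * (e * a + b) / e)
    by (apply Rmult_le_pos; [apply Rle_0_sqr|left; now apply Rinv_0_lt_compat]).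
  replace (e * (a * a) + / e * (b * b))
    with ((e * a + b) * (e * a + b) / e - 2 * (a * b)) by (field; lra).
  lra.
Qed.

Lemma sq_add4_le a b c d :
  (a + b + c + d) * (a + b + c + d) <= 4 * (a * a + b * b + c * c + d * d).
Proof.
  pose proof (Rle_0_sqr (a - b)). pose proof (Rle_0_sqr (a - c)).
  pose proof (Rle_0_sqr (a - d)). pose proof (Rle_0_sqr (b - c)).
  pose proof (Rle_0_sqr (b - d)). pose proof (Rle_0_sqr (c - d)).
  unfold Rsqr in *. nra.
Qed.

Lemma sq_le_of_sqrt_le a b c : 0 <= a -> 0 <= b -> sqrt a <= c * sqrt b -> a <= c * c * b.
Proof.
  intros Ha Hb H. pose proof (sqrt_pos a). pose proof (sqrt_pos b).
  rewrite <- (sqrt_sqrt a Ha), <- (sqrt_sqrt b Hb).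
  replace (c * c * (sqrt b * sqrt b)) with ((c * sqrt b) * (c * sqrt b)) by ring.
  apply Rmult_le_compat; lra.
Qed.

Lemma sq_le_of_abs_le a b c : Rabs a <= c * Rabs b -> a * a <= c * c * (b * b).
Proof.
  intros H. replace (c * c * (b * b)) with ((c * b) * (c * b)) by ring.
  apply Rsqr_le_abs_1. rewrite Rabs_mult.
  pose proof (Rmult_le_compat_r _ _ _ (Rabs_pos b) (Rle_abs c)). lra.
Qed.

Lemma lin_comb4_le c1 c2 c3 c4 d1 d2 d3 d4 t1 t2 t3 t4 :
  c1 <= d1 -> c2 <= d2 -> c3 <= d3 -> c4 <= d4 ->
  0 <= t1 -> 0 <= t2 -> 0 <= t3 -> 0 <= t4 ->
  c1 * t1 + c2 * t2 + c3 * t3 + c4 * t4 <= d1 * t1 + d2 * t2 + d3 * t3 + d4 * t4.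
Proof.
  intros. repeat apply Rplus_le_compat; now apply Rmult_le_compat_r.
Qed.

(* A one-sided inverse of a square matrix is two-sided ([mulmx1C]). *)
Module OrthonormalSquare.
Import all_boot all_algebra Rstruct.
Import GRing.Theory.
Local Open Scope ring_scope.

Lemma fsum_big (n : nat) (f : nat -> R) : fsum n f = \sum_(i < n) f i.
Proof.
elim: n => [|n IH] /=; first by rewrite big_ord0.
by rewrite big_ord_recr /= IH.
Qed.

Lemma kronecker_ord (K : nat) (i j : 'I_K) :
  (if Nat.eqb i j then R1 else R0) = (i == j)%:R.
Proof.
case: (PeanoNat.Nat.eqb_spec i j) => [/val_inj ->|ne]; first by rewrite eqxx.
by case: eqP => // e; case: ne; rewrite e.
Qed.

Lemma orthonormal_cols (K : nat) (V : nat -> nat -> R) :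
  (forall i i', lt i K -> lt i' K ->
     fsum K (fun l => Rmult (V i l) (V i' l)) = if Nat.eqb i i' then R1 else R0) ->
  forall l l', lt l K -> lt l' K ->
     fsum K (fun i => Rmult (V i l) (V i l')) = if Nat.eqb l l' then R1 else R0.
Proof.
move=> orth l l' /ssrnat.ltP Hl /ssrnat.ltP Hl'.
pose W : 'M[R]_K := \matrix_(i < K, j < K) V i j.
have WWt : W *m W^T = 1%:M.
  apply/matrixP => i j; rewrite !mxE -kronecker_ord -orth; try exact/ssrnat.ltP.
  by rewrite fsum_big; apply: eq_bigr => k _; rewrite !mxE.
have /matrixP/(_ (Ordinal Hl) (Ordinal Hl')) := mulmx1C WWt.
rewrite !mxE (kronecker_ord _ (Ordinal Hl) (Ordinal Hl')) fsum_big => <-.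
by apply: eq_bigr => k _; rewrite !mxE.
Qed.

End OrthonormalSquare.

Definition mix (K : nat) (A : nat -> nat -> R) (y : nat -> R) (k : nat) : R :=
  fsum K (fun l => A l k * y l).

Lemma fsum_mix K A y : (forall l, (l < K)%nat -> fsum K (fun k => A l k) = 1) ->
  fsum K (mix K A y) = fsum K y.
Proof.
  intros Hrow. unfold mix. rewrite fsum_swap. apply fsum_ext; intros l Hl.
  rewrite fsum_scalr, Hrow by exact Hl. ring.
Qed.

Lemma mix_const K A c k : fsum K (fun l => A l k) = 1 -> mix K A (fun _ => c) k = c.
Proof. intros Hcol. unfold mix. rewrite fsum_scalr, Hcol. ring. Qed.

Lemma mix_sub K A y y' k : mix K A (fun l => y l - y' l) k = mix K A y k - mix K A y' k.
Proof. unfold mix. rewrite <- fsum_sub. apply fsum_ext; intros; ring. Qed.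

Section Spectral.
Variables (K : nat) (A V : nat -> nat -> R) (e : nat -> R) (p : nat) (lam : R).
Hypothesis eigen : forall i l, (i < K)%nat -> (l < K)%nat ->
  fsum K (fun k => A l k * V i k) = e i * V i l.
Hypothesis orth : forall i i', (i < K)%nat -> (i' < K)%nat ->
  fsum K (fun l => V i l * V i' l) = if Nat.eqb i i' then 1 else 0.
Hypothesis p_lt : (p < K)%nat.
Hypothesis A_sym : forall l k, (l < K)%nat -> (k < K)%nat -> A l k = A k l.
Hypothesis A_row : forall l, (l < K)%nat -> fsum K (fun k => A l k) = 1.
Hypothesis eig_gap : forall i, (i < K)%nat -> i <> p -> Rabs (e i) <= lam.
Hypothesis lam_lt1 : lam < 1.

Let coord (y : nat -> R) i := fsum K (fun l => y l * V i l).

Lemma orth_expand y l : (l < K)%nat -> fsum K (fun i => coord y i * V i l) = y l.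
Proof.
  intros Hl. unfold coord.
  transitivity (fsum K (fun l' => y l' * fsum K (fun i => V i l' * V i l))).
  - rewrite (fsum_ext K _ (fun i => fsum K (fun l' => y l' * (V i l' * V i l)))).
    + rewrite fsum_swap. apply fsum_ext; intros. apply fsum_scal.
    + intros i _. rewrite <- fsum_scalr. apply fsum_ext; intros. ring.
  - rewrite <- (fsum_delta K y l Hl). apply fsum_ext; intros l' Hl'.
    rewrite OrthonormalSquare.orthonormal_cols by assumption. reflexivity.
Qed.

Lemma orth_parseval d :
  fsum K (fun k => fsum K (fun i => d i * V i k) * fsum K (fun i => d i * V i k))
  = fsum K (fun i => d i * d i).
Proof.
  transitivity (fsum K (fun i => fsum K (fun i' =>
                  d i * d i' * fsum K (fun k => V i k * V i' k)))).
  - rewrite (fsum_ext K _ (fun k => fsum K (fun i => fsum K (fun i' =>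
               d i * d i' * (V i k * V i' k))))).
    + rewrite fsum_swap. apply fsum_ext; intros i _.
      rewrite fsum_swap. apply fsum_ext; intros i' _. apply fsum_scal.
    + intros k _. rewrite fsum_mul. apply fsum_ext; intros; apply fsum_ext; intros; ring.
  - apply fsum_ext; intros i Hi. rewrite <- (fsum_delta K (fun i' => d i * d i') i Hi).
    apply fsum_ext; intros i' Hi'. rewrite orth by assumption.
    destruct (Nat.eqb_spec i i'), (Nat.eqb_spec i' i); subst; try lia; ring.
Qed.

Lemma mix_expand y k : (k < K)%nat ->
  mix K A y k = fsum K (fun i => coord y i * e i * V i k).
Proof.
  intros Hk. unfold mix.
  transitivity (fsum K (fun l => A k l * fsum K (fun i => coord y i * V i l))).
  { apply fsum_ext; intros l Hl. rewrite A_sym, orth_expand by assumption. reflexivity. }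
  rewrite (fsum_ext K _ (fun l => fsum K (fun i => coord y i * (A k l * V i l)))).
  - rewrite fsum_swap. apply fsum_ext; intros i Hi. rewrite fsum_scal, eigen by assumption. ring.
  - intros l _. rewrite <- fsum_scal. apply fsum_ext; intros; ring.
Qed.

(* Since A 1 = 1 and every other eigenvalue differs from 1, the constant
   vector is orthogonal to every eigenvector but [V p]. *)
Lemma sum_eigvec_eq0 i : (i < K)%nat -> i <> p -> fsum K (V i) = 0.
Proof.
  intros Hi Hip.
  assert (Hfix : e i * fsum K (V i) = fsum K (V i)).
  { rewrite <- fsum_scal.
    transitivity (fsum K (fun l => fsum K (fun k => A l k * V i k))).
    - apply fsum_ext; intros l Hl. rewrite eigen by assumption. reflexivity.
    - rewrite fsum_swap. apply fsum_ext; intros k Hk.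
      rewrite (fsum_ext K _ (fun l => V i k * A k l)) by (intros; rewrite A_sym by assumption; ring).
      rewrite fsum_scal, A_row by assumption. ring. }
  assert (e i <> 1).
  { intros E. specialize (eig_gap i Hi Hip). rewrite E, Rabs_R1 in eig_gap. lra. }
  apply Rmult_eq_reg_l with (e i - 1); lra.
Qed.

Lemma coord_perron_eq0 y : fsum K y = 0 -> coord y p = 0.
Proof.
  intros Hy.
  assert (Hsum : fsum K y = coord y p * fsum K (V p)).
  { rewrite (fsum_ext K y (fun l => fsum K (fun i => coord y i * V i l)))
      by (intros; symmetry; now apply orth_expand).
    rewrite fsum_swap.
    rewrite (fsum_ext K _ (fun i => if Nat.eqb i p then coord y p * fsum K (V p) else 0)).
    - rewrite fsum_update, fsum_zero by exact p_lt. ring.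
    - intros i Hi. rewrite fsum_scal.
      destruct (Nat.eqb_spec i p) as [->|Hip]; [reflexivity|].
      rewrite sum_eigvec_eq0 by assumption. ring. }
  assert (Hone : fsum K (V p) * V p p = 1).
  { rewrite <- (orth_expand (fun _ => 1) p p_lt). symmetry.
    rewrite (fsum_ext K _ (fun i => if Nat.eqb i p then fsum K (V p) * V p p else 0)).
    - rewrite fsum_update, fsum_zero by exact p_lt. ring.
    - intros i Hi. unfold coord.
      rewrite (fsum_ext K (fun l => 1 * V i l) (V i)) by (intros; ring).
      destruct (Nat.eqb_spec i p) as [->|Hip]; [reflexivity|].
      rewrite sum_eigvec_eq0 by assumption. ring. }
  rewrite Hy in Hsum. destruct (Rmult_integral _ _ (eq_sym Hsum)) as [|H0]; [assumption|].
  rewrite H0 in Hone. lra.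
Qed.

Lemma mix_contract y : fsum K y = 0 ->
  fsum K (fun k => mix K A y k * mix K A y k) <= lam * lam * fsum K (fun l => y l * y l).
Proof.
  intros Hy.
  rewrite (fsum_ext K (fun k => _ * _) (fun k =>
             fsum K (fun i => coord y i * e i * V i k) * fsum K (fun i => coord y i * e i * V i k)))
    by (intros; now rewrite mix_expand).
  rewrite (fsum_ext K (fun l => y l * y l) (fun k =>
             fsum K (fun i => coord y i * V i k) * fsum K (fun i => coord y i * V i k)))
    by (intros; now rewrite orth_expand).
  rewrite !orth_parseval, <- fsum_scal. apply fsum_le; intros i Hi.
  destruct (Nat.eq_dec i p) as [->|Hip].
  - rewrite coord_perron_eq0 by exact Hy. nra.
  - pose proof (eig_gap i Hi Hip). pose proof (Rabs_pos (e i)).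
    assert (e i * e i = Rabs (e i) * Rabs (e i))
      by (rewrite <- Rabs_mult; symmetry; apply Rabs_pos_eq, Rle_0_sqr).
    assert (e i * e i <= lam * lam) by nra.
    pose proof (Rle_0_sqr (coord y i)). unfold Rsqr in *. nra.
Qed.

End Spectral.

Lemma mix_contract_second_eig K A lam :
  second_largest_eig_mag K A lam -> lam < 1 ->
  (forall l k, (l < K)%nat -> (k < K)%nat -> A l k = A k l) ->
  (forall l, (l < K)%nat -> fsum K (fun k => A l k) = 1) ->
  forall y, fsum K y = 0 ->
  fsum K (fun k => mix K A y k * mix K A y k) <= lam * lam * fsum K (fun l => y l * y l).
Proof.
  intros (V & e & p & [eigen orth] & Hp & _ & _ & gap) Hlam Hsym Hrow.
  exact (mix_contract K A V e p lam eigen orth Hp Hsym Hrow gap Hlam).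
Qed.

Lemma derivable_pt_lim_fsum n (F : nat -> R -> R) D x :
  (forall i, (i < n)%nat -> derivable_pt_lim (F i) x (D i)) ->
  derivable_pt_lim (fun t => fsum n (fun i => F i t)) x (fsum n D).
Proof.
  induction n as [|n IH]; intros H; simpl.
  - apply derivable_pt_lim_const.
  - apply (derivable_pt_lim_plus (fun t => fsum n (fun i => F i t)) (F n));
      [apply IH; intros|]; apply H; lia.
Qed.

Lemma derivable_pt_lim_scal_l c f x l :
  derivable_pt_lim f x l -> derivable_pt_lim (fun t => c * f t) x (c * l).
Proof. apply derivable_pt_lim_scal. Qed.

Lemma derivable_pt_lim_along_line (f : R -> R) f' a b :
  derivable_pt_lim f a f' -> derivable_pt_lim (fun t => f (a + t * b)) 0 (f' * b).
Proof.
  intros Hf. apply (derivable_pt_lim_comp (fun t => a + t * b) f).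
  - apply (derivable_pt_lim_ext (plus_fct (fun _ => a) (fun t => b * id t)));
      [intros; unfold plus_fct, id; ring|].
    rewrite <- (Rplus_0_l b), <- (Rmult_1_r b) at 1.
    apply derivable_pt_lim_plus; [apply derivable_pt_lim_const|].
    apply derivable_pt_lim_scal_l, derivable_pt_lim_id.
  - replace (a + 0 * b) with a by ring. exact Hf.
Qed.

Lemma hTw_along_line K M hn w d t :
  hTw K M hn (fun k j => w k j + t * d k j) = hTw K M hn w + t * hTw K M hn d.
Proof.
  unfold hTw. rewrite !dotf_bsum, <- bsum_scal, <- bsum_add.
  apply bsum_ext; intros; ring.
Qed.

Section Risk.
Variables (N K : nat) (M : nat -> nat) (h : nat -> bvec) (gam : nat -> R)
  (Q dQ : R -> R -> R) (r : nat -> vec -> R) (gr : nat -> vec -> vec).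
Hypothesis Q_deriv : forall g z, derivable_pt_lim (fun y => Q y g) z (dQ z g).
Hypothesis r_grad : forall k, (k < K)%nat -> is_block_gradient (M k) (r k) (gr k).

Lemma dotf_gradR w d :
  dotf K M (gradR N K M h gam dQ gr w) d =
  avg N (fun n => dQ (hTw K M (h n) w) (gam n) * hTw K M (h n) d)
  + fsum K (fun k => dotb (M k) (gr k (w k)) (d k)).
Proof.
  rewrite dotf_bsum. unfold gradR, avg.
  rewrite (bsum_ext K M _ (fun k j => / INR N * fsum N (fun n =>
      dQ (hTw K M (h n) w) (gam n) * (h n k j * d k j)) + gr k (w k) j * d k j))
    by (intros; rewrite Rmult_plus_distr_r, Rmult_assoc, <- fsum_scalr;
        do 2 f_equal; apply fsum_ext; intros; ring).
  rewrite bsum_add, bsum_scal, bsum_fsum_swap. f_equal. f_equal.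
  apply fsum_ext; intros n _. unfold hTw. rewrite (dotf_bsum K M (h n) d), <- bsum_scal.
  reflexivity.
Qed.

Lemma Rrisk_directional_derivative w d :
  derivable_pt_lim (fun t => Rrisk N K M h gam Q r (fun k j => w k j + t * d k j)) 0
    (dotf K M (gradR N K M h gam dQ gr w) d).
Proof.
  rewrite dotf_gradR. unfold Rrisk, rfull.
  apply (derivable_pt_lim_plus
    (fun t => / INR N * fsum N (fun n => Q (hTw K M (h n) (fun k j => w k j + t * d k j)) (gam n)))
    (fun t => fsum K (fun k => r k (fun j => w k j + t * d k j)))).
  - apply derivable_pt_lim_scal_l, derivable_pt_lim_fsum. intros n _.
    apply (derivable_pt_lim_ext (fun t => Q (hTw K M (h n) w + t * hTw K M (h n) d) (gam n))).
    + intros t. now rewrite hTw_along_line.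
    + apply (derivable_pt_lim_along_line (fun y => Q y (gam n))), Q_deriv.
  - apply (derivable_pt_lim_fsum K (fun k t => r k (fun j => w k j + t * d k j))).
    intros k Hk. apply r_grad, Hk.
Qed.

(* Fermat's rule along the direction of the gradient itself. *)
Lemma gradR_minimizer_eq0 wstar :
  (forall w, Rrisk N K M h gam Q r wstar <= Rrisk N K M h gam Q r w) ->
  forall k j, (k < K)%nat -> (j < M k)%nat -> gradR N K M h gam dQ gr wstar k j = 0.
Proof.
  intros Hmin k j Hk Hj.
  set (G := gradR N K M h gam dQ gr wstar).
  set (f := fun t => Rrisk N K M h gam Q r (fun k j => wstar k j + t * G k j)).
  pose proof (Rrisk_directional_derivative wstar G) as Hd. fold G f in Hd.
  assert (Hpr : derivable_pt f 0) by (exists (dotf K M G G); exact Hd).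
  assert (HG : dotf K M G G = 0).
  { rewrite <- (derive_pt_eq_0 f 0 _ Hpr Hd).
    apply (deriv_minimum f (-1) 1 0 Hpr); try lra. intros t _ _. unfold f.
    replace (fun k j => wstar k j + 0 * G k j) with wstar; [apply Hmin|].
    apply functional_extensionality; intros k'; apply functional_extensionality; intros j'.
    ring. }
  assert (HGk : dotb (M k) (G k) (G k) = 0).
  { apply (fsum_nonneg_eq0 K (fun k => dotb (M k) (G k) (G k))); auto.
    intros; apply dotb_self_nonneg. }
  pose proof (fsum_nonneg_eq0 (M k) (fun j => G k j * G k j)
                (fun _ _ => Rle_0_sqr _) HGk j Hj) as HGkj.
  cbv beta in HGkj. nra.
Qed.

End Risk.

Lemma expect_le N m F G : (0 < N)%nat -> (forall s, F s <= G s) ->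
  expect N m F <= expect N m G.
Proof.
  intros HN. revert F G. induction m as [|m IH]; intros F G H; simpl; auto.
  apply Rmult_le_compat_l; [now apply Rlt_le, Rinv_0_lt_compat, lt_0_INR|].
  apply fsum_le; intros. apply IH; auto.
Qed.

Lemma expect_scal N m c F : expect N m (fun s => c * F s) = c * expect N m F.
Proof.
  revert F. induction m as [|m IH]; intros F; simpl; auto.
  rewrite (fsum_ext N _ (fun n => c * expect N m (fun s => F (upd s (S m) n))))
    by (intros; apply IH).
  rewrite fsum_scal. ring.
Qed.

Lemma expect_avg N m (F : nat -> (nat -> nat) -> R) :
  expect N m (fun s => avg N (fun n => F n s)) = avg N (fun n => expect N m (F n)).
Proof.
  unfold avg. revert F. induction m as [|m IH]; intros F; simpl; auto.
  rewrite (fsum_ext N _ (fun n' => / INR N * fsum N (fun n =>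
             expect N m (fun s => F n (upd s (S m) n')))))
    by (intros; apply (IH (fun n s => F n (upd s (S m) _)))).
  f_equal.
  transitivity (fsum N (fun n' => fsum N (fun n =>
                  / INR N * expect N m (fun s => F n (upd s (S m) n'))))).
  - apply fsum_ext; intros. symmetry. apply fsum_scal.
  - rewrite fsum_swap. apply fsum_ext; intros. apply fsum_scal.
Qed.

Section VRD.
Variables (N K : nat) (M : nat -> nat) (h : nat -> bvec) (gam : nat -> R)
  (dQ : R -> R -> R) (gr : nat -> vec -> vec) (A : nat -> nat -> R) (mu : R).

Definition step (x : vrd_state) (n : nat) : vrd_state := vrd_step N K M A h gam dQ gr mu x n.

Definition hw x n := hTw K M (h n) (st_w x).
Definition Kdot x n l := INR K * dotb (M l) (h n l) (st_w x l).
Definition zest x n := mix K A (fun l => st_u x n l + Kdot x n l - st_v x n l).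
Definition dir x n k j :=
  (dQ (zest x n k) (gam n) - dQ (st_u x n k) (gam n)) * h n k j
  + avg N (fun n' => dQ (st_u x n' k) (gam n') * h n' k j)
  + gr k (st_w x k) j.

Lemma step_w x n k j : st_w (step x n) k j = st_w x k j - mu * dir x n k j.
Proof. reflexivity. Qed.

Lemma step_u x n m k :
  st_u (step x n) m k = if Nat.eqb m n then zest x n k else st_u x m k.
Proof. reflexivity. Qed.

Lemma step_v x n m k :
  st_v (step x n) m k = if Nat.eqb m n then Kdot x n k else st_v x m k.
Proof. reflexivity. Qed.

Lemma step_u_other x n m k : m <> n -> st_u (step x n) m k = st_u x m k.
Proof. intros Hmn. rewrite step_u. now destruct (Nat.eqb_spec m n). Qed.

Lemma step_u_same x n k : st_u (step x n) n k = zest x n k.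
Proof. now rewrite step_u, Nat.eqb_refl. Qed.

Lemma fsum_Kdot x n : fsum K (Kdot x n) = INR K * hw x n.
Proof. apply fsum_scal. Qed.

(* This invariant makes the average of [u_n + K h_n^T w - v_n] equal to [h_n^T w]. *)
Definition balanced x := forall n, (n < N)%nat -> fsum K (st_u x n) = fsum K (st_v x n).

Hypothesis A_row : forall l, (l < K)%nat -> fsum K (fun k => A l k) = 1.

Lemma fsum_zest x n : balanced x -> (n < N)%nat -> fsum K (zest x n) = INR K * hw x n.
Proof.
  intros Hb Hn. unfold zest. rewrite fsum_mix, fsum_sub, fsum_add, fsum_Kdot, Hb by assumption.
  ring.
Qed.

Lemma balanced_init : balanced vrd_init.
Proof. intros n _. reflexivity. Qed.

Lemma balanced_step x n : balanced x -> balanced (step x n).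
Proof.
  intros Hb m Hm.
  rewrite (fsum_ext K _ _ (fun k _ => step_u x n m k)),
          (fsum_ext K _ _ (fun k _ => step_v x n m k)).
  destruct (Nat.eqb_spec m n) as [->|]; [|now apply Hb].
  now rewrite fsum_zest, fsum_Kdot.
Qed.

Hypothesis K_pos : (0 < K)%nat.
Hypothesis A_sym : forall l k, (l < K)%nat -> (k < K)%nat -> A l k = A k l.
Variable lam : R.
Hypothesis lam_bounds : 0 < lam < 1.
Hypothesis mix_contracts : forall y, fsum K y = 0 ->
  fsum K (fun k => mix K A y k * mix K A y k) <= lam * lam * fsum K (fun l => y l * y l).

Lemma A_col k : (k < K)%nat -> fsum K (fun l => A l k) = 1.
Proof.
  intros Hk. rewrite (fsum_ext K _ (fun l => A k l)) by (intros; now apply A_sym).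
  now apply A_row.
Qed.

Definition umean x n := avg K (st_u x n).
Definition udev x n := fsum K (fun k => (st_u x n k - umean x n) * (st_u x n k - umean x n)).
Definition vlag x n k := Kdot x n k - st_v x n k.
Definition vlag_sq x n := fsum K (fun k => vlag x n k * vlag x n k).
Definition zdev x n := fsum K (fun k => (zest x n k - hw x n) * (zest x n k - hw x n)).

(* [z_n - (h_n^T w) 1] is one diffusion round applied to the zero-mean vector
   [(u_n - mean u_n) + (vlag_n - mean vlag_n)]. *)
Lemma zdev_le x n e : 0 < e -> balanced x -> (n < N)%nat ->
  zdev x n <= lam * lam * ((1 + e) * udev x n + (1 + / e) * vlag_sq x n).
Proof.
  intros He Hb Hn.
  set (y := fun l => st_u x n l + vlag x n l - hw x n).
  assert (Hvlag : fsum K (vlag x n) = INR K * hw x n - fsum K (st_u x n))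
    by (unfold vlag; rewrite fsum_sub, fsum_Kdot, Hb by exact Hn; reflexivity).
  assert (Hy0 : fsum K y = 0)
    by (unfold y; rewrite fsum_sub, fsum_add, fsum_const, Hvlag; ring).
  assert (Hmean : hw x n = umean x n + avg K (vlag x n))
    by (unfold umean, avg; rewrite Hvlag; field; apply Rgt_not_eq, lt_0_INR, K_pos).
  assert (Hz : forall k, (k < K)%nat -> zest x n k - hw x n = mix K A y k).
  { intros k Hk. unfold y. rewrite mix_sub, mix_const by now apply A_col.
    unfold zest, mix, vlag. f_equal. apply fsum_ext; intros. ring. }
  unfold zdev. rewrite (fsum_ext K _ (fun k => mix K A y k * mix K A y k))
    by (intros; now rewrite Hz).
  eapply Rle_trans; [now apply mix_contracts|].
  apply Rmult_le_compat_l; [apply Rle_0_sqr|].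
  rewrite (fsum_ext K (fun l => y l * y l) (fun l =>
      ((st_u x n l - umean x n) + (vlag x n l - avg K (vlag x n)))
      * ((st_u x n l - umean x n) + (vlag x n l - avg K (vlag x n)))))
    by (intros; unfold y; rewrite Hmean; ring).
  eapply Rle_trans; [apply (fsum_sq_add_le_young K _ _ e He)|].
  apply Rplus_le_compat_l, Rmult_le_compat_l.
  - pose proof (Rinv_0_lt_compat e He). lra.
  - now apply fsum_sq_centered_le.
Qed.

Definition gapinv := / (1 - lam).

Lemma gapinv_ge1 : 1 <= gapinv.
Proof. unfold gapinv. rewrite <- Rinv_1. apply Rinv_le_contravar; lra. Qed.

Lemma zdev_le_sharp x n : balanced x -> (n < N)%nat ->
  zdev x n <= lam * udev x n + lam * lam * gapinv * vlag_sq x n.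
Proof.
  intros Hb Hn. eapply Rle_trans.
  - apply (zdev_le x n ((1 - lam) / lam)); [apply Rdiv_lt_0_compat; lra|assumption..].
  - right. unfold gapinv. field. lra.
Qed.

Lemma zdev_le_crude x n : balanced x -> (n < N)%nat ->
  zdev x n <= udev x n + gapinv * vlag_sq x n.
Proof.
  intros Hb Hn. pose proof (zdev_le_sharp x n Hb Hn).
  assert (Hu : 0 <= udev x n) by apply fsum_sq_nonneg.
  assert (Hv : 0 <= gapinv * vlag_sq x n)
    by (apply Rmult_le_pos; [pose proof gapinv_ge1; lra|apply fsum_sq_nonneg]).
  assert (lam * udev x n <= udev x n) by nra.
  assert (lam * lam * gapinv * vlag_sq x n <= gapinv * vlag_sq x n).
  { assert (lam * lam <= 1) by nra.
    replace (lam * lam * gapinv * vlag_sq x n) with (lam * lam * (gapinv * vlag_sq x n))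
      by ring. nra. }
  lra.
Qed.

Definition udev_total x := fsum N (udev x).

Lemma udev_step x n m : balanced x -> (n < N)%nat ->
  udev (step x n) m = if Nat.eqb m n then zdev x n else udev x m.
Proof.
  intros Hb Hn. destruct (Nat.eqb_spec m n) as [->|Hmn].
  - assert (Hmean : umean (step x n) n = hw x n).
    { unfold umean, avg. rewrite (fsum_ext K _ _ (fun k _ => step_u_same x n k)).
      rewrite fsum_zest by assumption. field. apply Rgt_not_eq, lt_0_INR, K_pos. }
    unfold udev, zdev. rewrite Hmean. apply fsum_ext; intros. now rewrite step_u_same.
  - assert (Hmean : umean (step x n) m = umean x m)
      by (apply avg_ext; intros; now apply step_u_other).
    unfold udev. rewrite Hmean. apply fsum_ext; intros. now rewrite step_u_other.
Qed.

Lemma udev_total_step x n : balanced x -> (n < N)%nat ->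
  udev_total (step x n) = udev_total x - udev x n + zdev x n.
Proof.
  intros Hb Hn. unfold udev_total.
  rewrite (fsum_ext N _ _ (fun m _ => udev_step x n m Hb Hn)). now apply fsum_update.
Qed.

Variable wstar : bvec.

Definition hwstar n := hTw K M (h n) wstar.
Definition werr x := bsub (st_w x) wstar.
Definition werr_sq x := dotf K M (werr x) (werr x).
Definition uerr x n := fsum K (fun k => (st_u x n k - hwstar n) * (st_u x n k - hwstar n)).
Definition uerr_total x := fsum N (uerr x).
Definition zerr x n := fsum K (fun k => (zest x n k - hwstar n) * (zest x n k - hwstar n)).

Lemma uerr_total_step x n : (n < N)%nat ->
  uerr_total (step x n) = uerr_total x - uerr x n + zerr x n.
Proof.
  intros Hn. unfold uerr_total. rewrite <- fsum_update by exact Hn.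
  apply fsum_ext; intros m Hm. unfold uerr, zerr.
  destruct (Nat.eqb_spec m n) as [->|Hmn];
    apply fsum_ext; intros; [now rewrite step_u_same|now rewrite step_u_other].
Qed.

Definition hsize := 1 + fsum N (fun n => dotf K M (h n) (h n)).

Lemma hsize_ge1 : 1 <= hsize.
Proof.
  unfold hsize. pose proof (fsum_nonneg N _ (fun n _ => dotf_self_nonneg K M (h n))). lra.
Qed.

Lemma h_sq_le_hsize n : (n < N)%nat -> dotf K M (h n) (h n) <= hsize.
Proof.
  intros Hn. unfold hsize.
  pose proof (fsum_term_le N _ n Hn (fun n _ => dotf_self_nonneg K M (h n))). lra.
Qed.

Lemma hblock_sq_le_hsize n k : (n < N)%nat -> (k < K)%nat ->
  dotb (M k) (h n k) (h n k) <= hsize.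
Proof. intros. eapply Rle_trans; [apply (dotb_le_dotf K M (h n) k)|apply h_sq_le_hsize]; assumption. Qed.

Lemma fsum_hblock_sq_le_hsize k : (k < K)%nat ->
  fsum N (fun n => dotb (M k) (h n k) (h n k)) <= hsize.
Proof.
  intros Hk. unfold hsize.
  assert (fsum N (fun n => dotb (M k) (h n k) (h n k)) <= fsum N (fun n => dotf K M (h n) (h n)))
    by (apply fsum_le; intros; now apply dotb_le_dotf).
  lra.
Qed.

Lemma hw_sub_hwstar x n : hw x n - hwstar n = dotf K M (h n) (werr x).
Proof.
  unfold hw, hwstar, hTw, werr, bsub. rewrite !dotf_bsum, <- bsum_sub.
  apply bsum_ext; intros; ring.
Qed.

Lemma hw_sub_hwstar_sq_le x n : (n < N)%nat ->
  (hw x n - hwstar n) * (hw x n - hwstar n) <= hsize * werr_sq x.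
Proof.
  intros Hn. rewrite hw_sub_hwstar. eapply Rle_trans; [apply dotf_cauchy_schwarz|].
  apply Rmult_le_compat_r; [apply dotf_self_nonneg|now apply h_sq_le_hsize].
Qed.

Lemma zerr_le x n : (n < N)%nat -> zerr x n <= 2 * zdev x n + 2 * INR K * (hsize * werr_sq x).
Proof.
  intros Hn. unfold zerr, zdev.
  rewrite (fsum_ext K _ (fun k => ((zest x n k - hw x n) + (hw x n - hwstar n))
                               * ((zest x n k - hw x n) + (hw x n - hwstar n))))
    by (intros; ring).
  eapply Rle_trans; [apply (fsum_sq_add_le_young K _ _ 1 Rlt_0_1)|].
  cbv beta. rewrite fsum_const, Rinv_1. pose proof (hw_sub_hwstar_sq_le x n Hn).
  pose proof (pos_INR K). apply Rplus_le_compat; [lra|]. nra.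
Qed.

Definition vlag_total x := fsum N (vlag_sq x).
Definition dir_sq x n := dotf K M (dir x n) (dir x n).
Definition vlag_incr x n m k := mu * INR K * dotb (M k) (h m k) (dir x n k).
Definition vlag_incr_sq x n m := fsum K (fun k => vlag_incr x n m k * vlag_incr x n m k).

Lemma vlag_step x n m k : vlag (step x n) m k =
  if Nat.eqb m n then - vlag_incr x n m k else vlag x m k - vlag_incr x n m k.
Proof.
  unfold vlag, vlag_incr. rewrite step_v. unfold Kdot.
  replace (dotb (M k) (h m k) (st_w (step x n) k))
    with (dotb (M k) (h m k) (st_w x k) - mu * dotb (M k) (h m k) (dir x n k))
    by (unfold dotb; rewrite <- fsum_scal, <- fsum_sub; apply fsum_ext; intros; rewrite step_w; ring).
  destruct (Nat.eqb_spec m n) as [->|]; ring.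
Qed.

Lemma vlag_total_step_le x n e : 0 < e -> (n < N)%nat ->
  vlag_total (step x n) <= (1 + e) * (vlag_total x - vlag_sq x n)
                            + (1 + / e) * fsum N (vlag_incr_sq x n).
Proof.
  intros He Hn. assert (Hie : 0 < / e) by now apply Rinv_0_lt_compat.
  apply Rle_trans with (fsum N (fun m => if Nat.eqb m n then vlag_incr_sq x n n
                          else (1 + e) * vlag_sq x m + (1 + / e) * vlag_incr_sq x n m)).
  - apply fsum_le; intros m Hm. unfold vlag_sq at 1. destruct (Nat.eqb_spec m n) as [->|Hmn].
    + apply Req_le, fsum_ext; intros. rewrite vlag_step, Nat.eqb_refl. ring.
    + rewrite (fsum_ext K _ (fun k => (vlag x m k + - vlag_incr x n m k)
                                   * (vlag x m k + - vlag_incr x n m k))).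
      * eapply Rle_trans; [apply (fsum_sq_add_le_young K _ _ e He)|].
        unfold vlag_sq, vlag_incr_sq. right. do 2 f_equal. apply fsum_ext; intros; ring.
      * intros. rewrite vlag_step. destruct (Nat.eqb_spec m n); [lia|ring].
  - unfold vlag_total. rewrite fsum_update, fsum_add, !fsum_scal by exact Hn.
    pose proof (fsum_sq_nonneg K (vlag_incr x n n)). fold (vlag_incr_sq x n n) in H.
    assert (vlag_incr_sq x n n <= (1 + / e) * vlag_incr_sq x n n) by nra. lra.
Qed.

Lemma fsum_vlag_incr_sq_le x n :
  fsum N (vlag_incr_sq x n) <= mu * mu * (INR K * INR K) * hsize * dir_sq x n.
Proof.
  unfold vlag_incr_sq, vlag_incr, dir_sq, dotf.
  rewrite (fsum_ext N _ (fun m => mu * mu * (INR K * INR K) * fsum K (fun k =>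
             dotb (M k) (h m k) (dir x n k) * dotb (M k) (h m k) (dir x n k))))
    by (intros; rewrite <- fsum_scal; apply fsum_ext; intros; ring).
  rewrite fsum_scal, (Rmult_assoc _ hsize). apply Rmult_le_compat_l.
  { pose proof (Rle_0_sqr mu). pose proof (Rle_0_sqr (INR K)). unfold Rsqr in *.
    now apply Rmult_le_pos. }
  rewrite fsum_swap, <- fsum_scal. apply fsum_le; intros k Hk.
  apply Rle_trans with (fsum N (fun m => dotb (M k) (h m k) (h m k)
                                         * dotb (M k) (dir x n k) (dir x n k))).
  - apply fsum_le; intros. apply fsum_cauchy_schwarz.
  - rewrite fsum_scalr. apply Rmult_le_compat_r; [apply dotb_self_nonneg|].
    now apply fsum_hblock_sq_le_hsize.
Qed.

Lemma werr_sq_step x n :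
  werr_sq (step x n) = werr_sq x - 2 * mu * dotf K M (werr x) (dir x n) + mu * mu * dir_sq x n.
Proof.
  unfold werr_sq, dir_sq. rewrite !dotf_bsum.
  rewrite (bsum_ext K M _ (fun k j => (werr x k j * werr x k j
             - 2 * mu * (werr x k j * dir x n k j)) + mu * mu * (dir x n k j * dir x n k j)))
    by (intros; unfold werr, bsub; rewrite step_w; ring).
  rewrite bsum_add, bsum_sub, !bsum_scal. ring.
Qed.

Variables (delta eta nu : R).
Hypothesis N_pos : (0 < N)%nat.
Hypothesis dQ_lip : forall n z1 z2, (n < N)%nat ->
  Rabs (dQ z1 (gam n) - dQ z2 (gam n)) <= delta * Rabs (z1 - z2).
Hypothesis gr_lip : forall w1 w2,
  normf K M (fun k j => gr k (w1 k) j - gr k (w2 k) j) <= eta * normf K M (bsub w1 w2).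
Hypothesis R_strong : forall w1 w2,
  dotf K M (bsub (gradR N K M h gam dQ gr w1) (gradR N K M h gam dQ gr w2)) (bsub w1 w2)
  >= nu * dotf K M (bsub w1 w2) (bsub w1 w2).
Hypothesis gradR_wstar : forall k j, (k < K)%nat -> (j < M k)%nat ->
  gradR N K M h gam dQ gr wstar k j = 0.

Lemma fsum_dQ_diff_sq_le n a b : (n < N)%nat ->
  fsum K (fun k => (dQ (a k) (gam n) - dQ (b k) (gam n)) * (dQ (a k) (gam n) - dQ (b k) (gam n)))
  <= delta * delta * fsum K (fun k => (a k - b k) * (a k - b k)).
Proof.
  intros Hn. rewrite <- fsum_scal. apply fsum_le; intros.
  now apply sq_le_of_abs_le, dQ_lip.
Qed.

Lemma bsum_scaled_h_sq_le n f : (n < N)%nat ->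
  bsum K M (fun k j => (f k * h n k j) * (f k * h n k j)) <= hsize * fsum K (fun k => f k * f k).
Proof.
  intros Hn. rewrite <- fsum_scal. apply fsum_le; intros k Hk.
  rewrite (fsum_ext (M k) _ (fun j => f k * f k * (h n k j * h n k j))) by (intros; ring).
  rewrite fsum_scal, Rmult_comm. apply Rmult_le_compat_r; [apply Rle_0_sqr|].
  now apply hblock_sq_le_hsize.
Qed.

Lemma bsum_avg_scaled_h_sq_le (f : nat -> nat -> R) :
  bsum K M (fun k j => avg N (fun n => f n k * h n k j) * avg N (fun n => f n k * h n k j))
  <= hsize * avg N (fun n => fsum K (fun k => f n k * f n k)).
Proof.
  eapply Rle_trans.
  - apply bsum_le; intros. apply (avg_sq_le N N_pos (fun n => f n _ * h n _ _)).
  - rewrite bsum_avg, <- avg_scal. apply avg_le; [exact N_pos|]. intros n Hn.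
    now apply bsum_scaled_h_sq_le.
Qed.

Definition grad_bias x k j :=
  avg N (fun n => (dQ (zest x n k) (gam n) - dQ (hw x n) (gam n)) * h n k j).

Lemma avg_dir x k j :
  avg N (fun n => dir x n k j) = gradR N K M h gam dQ gr (st_w x) k j + grad_bias x k j.
Proof.
  unfold dir, gradR, grad_bias.
  rewrite !avg_add, !(avg_const N N_pos).
  rewrite (avg_ext N _ (fun n => dQ (zest x n k) (gam n) * h n k j
                                - dQ (st_u x n k) (gam n) * h n k j)) by (intros; ring).
  rewrite (avg_ext N (fun n => (_ - _) * h n k j) (fun n => dQ (zest x n k) (gam n) * h n k j
                                - dQ (hw x n) (gam n) * h n k j)) by (intros; ring).
  rewrite !avg_sub. unfold avg, hw. ring.
Qed.

Lemma avg_werr_dot_dir x :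
  avg N (fun n => dotf K M (werr x) (dir x n))
  = dotf K M (werr x) (gradR N K M h gam dQ gr (st_w x)) + dotf K M (werr x) (grad_bias x).
Proof.
  rewrite !dotf_bsum, <- bsum_add.
  rewrite (bsum_ext K M _ (fun k j => werr x k j * avg N (fun n => dir x n k j)))
    by (intros; rewrite avg_dir; ring).
  rewrite (bsum_ext K M _ (fun k j => avg N (fun n => werr x k j * dir x n k j)))
    by (intros; symmetry; apply avg_scal).
  rewrite bsum_avg. reflexivity.
Qed.

Lemma werr_dot_gradR_ge x : nu * werr_sq x <= dotf K M (werr x) (gradR N K M h gam dQ gr (st_w x)).
Proof.
  pose proof (R_strong (st_w x) wstar) as H.
  replace (dotf K M (bsub (gradR N K M h gam dQ gr (st_w x)) (gradR N K M h gam dQ gr wstar))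
                    (bsub (st_w x) wstar))
    with (dotf K M (werr x) (gradR N K M h gam dQ gr (st_w x))) in H.
  - unfold werr_sq, werr in *. lra.
  - rewrite !dotf_bsum. apply bsum_ext; intros k j Hk Hj.
    unfold werr, bsub. rewrite gradR_wstar by assumption. ring.
Qed.

Lemma grad_bias_sq_le x :
  dotf K M (grad_bias x) (grad_bias x) <= delta * delta * hsize * avg N (zdev x).
Proof.
  eapply Rle_trans; [apply (bsum_avg_scaled_h_sq_le (fun n k =>
                             dQ (zest x n k) (gam n) - dQ (hw x n) (gam n)))|].
  replace (delta * delta * hsize * avg N (zdev x))
    with (hsize * avg N (fun n => delta * delta * zdev x n)) by (rewrite avg_scal; ring).
  apply Rmult_le_compat_l; [pose proof hsize_ge1; lra|].
  apply avg_le; [exact N_pos|]. intros n Hn.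
  apply (fsum_dQ_diff_sq_le n (zest x n) (fun _ => hw x n) Hn).
Qed.

Lemma bsum_dQ_diff_h_sq_le n a b : (n < N)%nat ->
  bsum K M (fun k j => ((dQ (a k) (gam n) - dQ (b k) (gam n)) * h n k j)
                       * ((dQ (a k) (gam n) - dQ (b k) (gam n)) * h n k j))
  <= delta * delta * hsize * fsum K (fun k => (a k - b k) * (a k - b k)).
Proof.
  intros Hn. eapply Rle_trans; [now apply bsum_scaled_h_sq_le|].
  pose proof (fsum_dQ_diff_sq_le n a b Hn). pose proof hsize_ge1.
  replace (delta * delta * hsize * _)
    with (hsize * (delta * delta * fsum K (fun k => (a k - b k) * (a k - b k)))) by ring.
  apply Rmult_le_compat_l; lra.
Qed.

(* Subtracting the vanishing gradient at [wstar] splits the update direction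
   into four errors, each controlled by a Lipschitz constant. *)
Lemma dir_decomp x n k j : (k < K)%nat -> (j < M k)%nat ->
  dir x n k j =
    (dQ (zest x n k) (gam n) - dQ (hwstar n) (gam n)) * h n k j
    + - ((dQ (st_u x n k) (gam n) - dQ (hwstar n) (gam n)) * h n k j)
    + avg N (fun m => (dQ (st_u x m k) (gam m) - dQ (hwstar m) (gam m)) * h m k j)
    + (gr k (st_w x k) j - gr k (wstar k) j).
Proof.
  intros Hk Hj. pose proof (gradR_wstar k j Hk Hj) as H0. unfold gradR in H0.
  unfold dir.
  rewrite (avg_ext N (fun m => (dQ (st_u x m k) (gam m) - dQ (hwstar m) (gam m)) * h m k j)
                     (fun m => dQ (st_u x m k) (gam m) * h m k j
                               - dQ (hwstar m) (gam m) * h m k j)) by (intros; ring).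
  rewrite avg_sub. unfold avg, hwstar. lra.
Qed.

Lemma dir_sq_le x n : (n < N)%nat ->
  dir_sq x n <= 4 * (delta * delta * hsize * zerr x n + delta * delta * hsize * uerr x n
                     + delta * delta * hsize * avg N (uerr x) + eta * eta * werr_sq x).
Proof.
  intros Hn. unfold dir_sq. rewrite dotf_bsum.
  rewrite (bsum_ext K M _ _ (fun k j Hk Hj => f_equal2 Rmult (dir_decomp x n k j Hk Hj)
                                                             (dir_decomp x n k j Hk Hj))).
  eapply Rle_trans; [apply bsum_le; intros; apply sq_add4_le|].
  rewrite bsum_scal, !bsum_add. apply Rmult_le_compat_l; [lra|].
  repeat apply Rplus_le_compat.
  - now apply bsum_dQ_diff_h_sq_le.
  - rewrite (bsum_ext K M _ (fun k j =>
      ((dQ (st_u x n k) (gam n) - dQ (hwstar n) (gam n)) * h n k j)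
      * ((dQ (st_u x n k) (gam n) - dQ (hwstar n) (gam n)) * h n k j))) by (intros; ring).
    now apply bsum_dQ_diff_h_sq_le.
  - eapply Rle_trans; [apply (bsum_avg_scaled_h_sq_le (fun m k =>
                               dQ (st_u x m k) (gam m) - dQ (hwstar m) (gam m)))|].
    replace (delta * delta * hsize * avg N (uerr x))
      with (hsize * avg N (fun m => delta * delta * uerr x m)) by (rewrite avg_scal; ring).
    apply Rmult_le_compat_l; [pose proof hsize_ge1; lra|].
    apply avg_le; [exact N_pos|]. intros m Hm.
    apply (fsum_dQ_diff_sq_le m (st_u x m) (fun _ => hwstar m) Hm).
  - apply sq_le_of_sqrt_le; [apply fsum_nonneg; intros; apply fsum_sq_nonneg
                            |apply dotf_self_nonneg|apply gr_lip].
Qed.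

Hypothesis mu_pos : 0 < mu.
Hypothesis nu_pos : 0 < nu.

Lemma avg_zdev_le x : balanced x ->
  avg N (zdev x) <= / INR N * (udev_total x + gapinv * vlag_total x).
Proof.
  intros Hb. eapply Rle_trans; [apply avg_le; [exact N_pos|]; intros; now apply zdev_le_crude|].
  rewrite avg_add, avg_scal. right. unfold avg, udev_total, vlag_total. ring.
Qed.

Lemma avg_werr_sq_step x :
  avg N (fun n => werr_sq (step x n))
  <= (1 - mu * nu) * werr_sq x + mu * (delta * delta * hsize / nu) * avg N (zdev x)
     + mu * mu * avg N (dir_sq x).
Proof.
  rewrite (avg_ext N _ _ (fun n _ => werr_sq_step x n)).
  rewrite avg_add, avg_sub, (avg_const N N_pos), !avg_scal, avg_werr_dot_dir.
  pose proof (werr_dot_gradR_ge x).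
  assert (Hbias : -2 * dotf K M (werr x) (grad_bias x)
                  <= nu * werr_sq x + / nu * dotf K M (grad_bias x) (grad_bias x)).
  { unfold werr_sq. rewrite !dotf_bsum, <- !bsum_scal, <- bsum_add.
    apply bsum_le; intros. now apply mul2_le_young. }
  assert (/ nu * dotf K M (grad_bias x) (grad_bias x)
          <= delta * delta * hsize / nu * avg N (zdev x)).
  { unfold Rdiv. rewrite (Rmult_comm _ (/ nu)), !Rmult_assoc.
    apply Rmult_le_compat_l; [now apply Rlt_le, Rinv_0_lt_compat|].
    rewrite <- !Rmult_assoc. apply grad_bias_sq_le. }
  nra.
Qed.

Lemma avg_udev_total_step x : balanced x ->
  avg N (fun n => udev_total (step x n))
  <= (1 - (1 - lam) / INR N) * udev_total x + lam * lam * gapinv / INR N * vlag_total x.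
Proof.
  intros Hb. rewrite (avg_ext N _ _ (fun n Hn => udev_total_step x n Hb Hn)).
  eapply Rle_trans.
  - apply avg_le; [exact N_pos|]. intros n Hn.
    apply (Rplus_le_compat_l (udev_total x - udev x n)), zdev_le_sharp; assumption.
  - rewrite (avg_ext N _ (fun n => udev_total x - (1 - lam) * udev x n
                                  + lam * lam * gapinv * vlag_sq x n)) by (intros; ring).
    rewrite avg_add, avg_sub, (avg_const N N_pos), !avg_scal.
    right. unfold avg, udev_total, vlag_total. field. apply Rgt_not_eq, lt_0_INR, N_pos.
Qed.

Lemma avg_vlag_total_step x :
  avg N (fun n => vlag_total (step x n))
  <= (1 + / (2 * INR N)) * (1 - / INR N) * vlag_total x
     + (1 + 2 * INR N) * (mu * mu * (INR K * INR K) * hsize) * avg N (dir_sq x).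
Proof.
  pose proof (lt_0_INR N N_pos) as HN.
  assert (He : 0 < / (2 * INR N)) by (apply Rinv_0_lt_compat; lra).
  eapply Rle_trans.
  - apply avg_le; [exact N_pos|]. intros n Hn.
    eapply Rle_trans; [apply (vlag_total_step_le x n _ He Hn)|].
    apply Rplus_le_compat_l, Rmult_le_compat_l; [pose proof (Rinv_0_lt_compat _ He); lra|].
    apply fsum_vlag_incr_sq_le.
  - rewrite avg_add, !avg_scal, avg_sub, (avg_const N N_pos), Rinv_inv.
    right. unfold avg, vlag_total. ring.
Qed.

Lemma avg_zerr_le x : avg N (zerr x) <= 2 * avg N (zdev x) + 2 * INR K * hsize * werr_sq x.
Proof.
  eapply Rle_trans; [apply avg_le; [exact N_pos|]; intros; now apply zerr_le|].
  rewrite avg_add, avg_scal, (avg_const N N_pos). right; ring.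
Qed.

Lemma avg_uerr_total_step x :
  avg N (fun n => uerr_total (step x n))
  <= (1 - / INR N) * uerr_total x + 2 * avg N (zdev x) + 2 * INR K * hsize * werr_sq x.
Proof.
  rewrite (avg_ext N _ _ (fun n Hn => uerr_total_step x n Hn)).
  rewrite avg_add, avg_sub, (avg_const N N_pos). pose proof (avg_zerr_le x).
  replace (avg N (uerr x)) with (/ INR N * uerr_total x) by reflexivity. lra.
Qed.

Definition dir_const := 8 * (delta * delta) * hsize * (1 + INR K * hsize) + 4 * (eta * eta).

Lemma dir_const_nonneg : 0 <= dir_const.
Proof.
  unfold dir_const. pose proof hsize_ge1. pose proof (pos_INR K).
  pose proof (Rle_0_sqr delta). pose proof (Rle_0_sqr eta). unfold Rsqr in *.
  assert (0 <= INR K * hsize) by nra. assert (0 <= delta * delta * hsize) by nra. nra.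
Qed.

Lemma avg_dir_sq_le x :
  avg N (dir_sq x) <= dir_const * (avg N (zdev x) + werr_sq x + / INR N * uerr_total x).
Proof.
  eapply Rle_trans; [apply avg_le; [exact N_pos|]; intros; now apply dir_sq_le|].
  rewrite avg_scal, !avg_add, !avg_scal, !(avg_const N N_pos).
  pose proof (avg_zerr_le x). pose proof hsize_ge1. pose proof (pos_INR K).
  assert (0 <= werr_sq x) by apply dotf_self_nonneg.
  assert (0 <= avg N (zdev x)) by (apply avg_nonneg; [exact N_pos|]; intros; apply fsum_sq_nonneg).
  assert (0 <= delta * delta * hsize) by (pose proof (Rle_0_sqr delta); unfold Rsqr in *; nra).
  assert (delta * delta * hsize * avg N (zerr x)
          <= delta * delta * hsize * (2 * avg N (zdev x) + 2 * INR K * hsize * werr_sq x))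
    by (apply Rmult_le_compat_l; assumption).
  assert (0 <= avg N (uerr x)) by (apply avg_nonneg; [exact N_pos|]; intros; apply fsum_sq_nonneg).
  change (/ INR N * uerr_total x) with (avg N (uerr x)). unfold dir_const.
  assert (0 <= delta * delta * hsize * INR K * hsize)
    by (apply Rmult_le_pos; [apply Rmult_le_pos|]; lra).
  pose proof (Rle_0_sqr eta). unfold Rsqr in *.
  set (Z := avg N (zdev x)) in *. set (U := avg N (uerr x)) in *. set (T := werr_sq x) in *.
  set (D := delta * delta * hsize) in *.
  replace (8 * (delta * delta) * hsize) with (8 * D) by (unfold D; ring). nra.
Qed.

(* [c_uerr] is tuned against the [2 K hsize werr_sq] feedback of the table
   errors, [c_udev] and [c_vlag] against the spectral gap, so that every
   component of [lyap] contracts. *)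
Definition c_uerr := nu / (8 * INR K * hsize).
Definition c_base := delta * delta * hsize / nu + 2 * c_uerr + 1.
Definition c_udev := 2 * c_base / (1 - lam).
Definition c_vlag := 2 * (c_udev * (lam * lam * gapinv) + gapinv * c_base) / lam.
Definition c_step := 1 + c_vlag * (1 + 2 * INR N) * (INR K * INR K) * hsize.

Definition lyap x :=
  werr_sq x + mu * (c_udev * udev_total x + c_vlag * vlag_total x + c_uerr * uerr_total x).
Definition rho := Rmax (1 - (1 - lam) / (2 * INR N)) (1 - mu * nu / 4).

Lemma c_uerr_pos : 0 < c_uerr.
Proof.
  unfold c_uerr. pose proof hsize_ge1. pose proof (lt_0_INR K K_pos).
  apply Rdiv_lt_0_compat; [assumption|]. nra.
Qed.

Lemma c_base_ge1 : 1 <= c_base.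
Proof.
  unfold c_base. pose proof c_uerr_pos. pose proof hsize_ge1.
  assert (0 <= delta * delta * hsize / nu).
  { apply Rmult_le_pos; [|now apply Rlt_le, Rinv_0_lt_compat].
    apply Rmult_le_pos; [apply Rle_0_sqr|lra]. }
  lra.
Qed.

Lemma c_udev_pos : 0 < c_udev.
Proof. unfold c_udev. pose proof c_base_ge1. apply Rdiv_lt_0_compat; lra. Qed.

Lemma c_vlag_pos : 0 < c_vlag.
Proof.
  unfold c_vlag. pose proof c_base_ge1. pose proof c_udev_pos. pose proof gapinv_ge1.
  apply Rdiv_lt_0_compat; [|lra].
  assert (0 <= c_udev * (lam * lam * gapinv))
    by (apply Rmult_le_pos; [lra|]; apply Rmult_le_pos; [apply Rle_0_sqr|lra]).
  assert (0 < gapinv * c_base) by (apply Rmult_lt_0_compat; lra).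
  lra.
Qed.

Lemma c_step_ge1 : 1 <= c_step.
Proof.
  unfold c_step. pose proof c_vlag_pos. pose proof hsize_ge1.
  pose proof (pos_INR N). pose proof (pos_INR K).
  assert (0 <= c_vlag * (1 + 2 * INR N) * (INR K * INR K) * hsize)
    by (apply Rmult_le_pos; [apply Rmult_le_pos; [apply Rmult_le_pos|apply Rle_0_sqr]|]; lra).
  lra.
Qed.

Lemma rho_pos : 0 < rho.
Proof.
  pose proof (Rmax_l (1 - (1 - lam) / (2 * INR N)) (1 - mu * nu / 4)).
  assert (1 <= INR N) by (apply (le_INR 1); exact N_pos).
  assert ((1 - lam) / (2 * INR N) <= 1 / 2).
  { apply Rmult_le_reg_r with (2 * INR N); [lra|].
    unfold Rdiv. rewrite Rmult_assoc, Rinv_l by lra. nra. }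
  unfold rho. lra.
Qed.

Lemma werr_sq_le_lyap x : werr_sq x <= lyap x.
Proof.
  unfold lyap. pose proof c_udev_pos. pose proof c_vlag_pos. pose proof c_uerr_pos.
  assert (0 <= udev_total x) by (apply fsum_nonneg; intros; apply fsum_sq_nonneg).
  assert (0 <= vlag_total x) by (apply fsum_nonneg; intros; apply fsum_sq_nonneg).
  assert (0 <= uerr_total x) by (apply fsum_nonneg; intros; apply fsum_sq_nonneg).
  assert (0 <= c_udev * udev_total x + c_vlag * vlag_total x + c_uerr * uerr_total x) by nra.
  nra.
Qed.

Hypothesis mu_le1 : mu <= 1.
Hypothesis mu_small : mu * (c_step * dir_const) <= Rmin (Rmin (nu / 2) (c_uerr / 2)) 1.

Definition dir_weight := mu * mu * (1 + mu * c_vlag * ((1 + 2 * INR N) * (INR K * INR K) * hsize)).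
Definition zdev_weight := mu * (delta * delta * hsize / nu + 2 * c_uerr).

Lemma dir_weight_nonneg : 0 <= dir_weight.
Proof.
  unfold dir_weight. pose proof c_vlag_pos. pose proof hsize_ge1.
  pose proof (pos_INR N). pose proof (pos_INR K).
  apply Rmult_le_pos; [apply Rle_0_sqr|].
  assert (0 <= mu * c_vlag * ((1 + 2 * INR N) * (INR K * INR K) * hsize))
    by (apply Rmult_le_pos; [apply Rmult_le_pos|apply Rmult_le_pos;
          [apply Rmult_le_pos; [|apply Rle_0_sqr]|]]; lra).
  lra.
Qed.

Lemma avg_lyap_step_le x : balanced x ->
  avg N (fun n => lyap (step x n)) <=
    (1 - mu * nu + mu * c_uerr * (2 * INR K * hsize)) * werr_sq x
    + mu * c_udev * (1 - (1 - lam) / INR N) * udev_total x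
    + (mu * c_udev * (lam * lam * gapinv / INR N)
       + mu * c_vlag * ((1 + / (2 * INR N)) * (1 - / INR N))) * vlag_total x
    + mu * c_uerr * (1 - / INR N) * uerr_total x
    + zdev_weight * avg N (zdev x) + dir_weight * avg N (dir_sq x).
Proof.
  intros Hb. unfold lyap.
  rewrite (avg_ext N _ (fun n => werr_sq (step x n) + (mu * c_udev) * udev_total (step x n)
             + (mu * c_vlag) * vlag_total (step x n) + (mu * c_uerr) * uerr_total (step x n)))
    by (intros; ring).
  rewrite !avg_add, !avg_scal.
  pose proof (avg_werr_sq_step x) as E1.
  pose proof (Rmult_le_compat_l (mu * c_udev) _ _
                (Rlt_le _ _ (Rmult_lt_0_compat _ _ mu_pos c_udev_pos))
                (avg_udev_total_step x Hb)) as E2.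
  pose proof (Rmult_le_compat_l (mu * c_vlag) _ _
                (Rlt_le _ _ (Rmult_lt_0_compat _ _ mu_pos c_vlag_pos))
                (avg_vlag_total_step x)) as E3.
  pose proof (Rmult_le_compat_l (mu * c_uerr) _ _
                (Rlt_le _ _ (Rmult_lt_0_compat _ _ mu_pos c_uerr_pos))
                (avg_uerr_total_step x)) as E4.
  unfold zdev_weight, dir_weight. unfold Rdiv in *. nra.
Qed.

Lemma dir_weight_le : dir_weight * dir_const <= mu * (mu * c_step * dir_const).
Proof.
  unfold dir_weight, c_step. pose proof dir_const_nonneg. pose proof c_vlag_pos.
  pose proof hsize_ge1. pose proof (pos_INR N). pose proof (pos_INR K).
  set (B := c_vlag * ((1 + 2 * INR N) * (INR K * INR K) * hsize)).
  assert (0 <= B) by (unfold B; apply Rmult_le_pos;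
                        [|apply Rmult_le_pos; [apply Rmult_le_pos; [|apply Rle_0_sqr]|]]; lra).
  replace (1 + c_vlag * (1 + 2 * INR N) * (INR K * INR K) * hsize) with (1 + B) by (unfold B; ring).
  replace (mu * mu * (1 + mu * c_vlag * ((1 + 2 * INR N) * (INR K * INR K) * hsize)))
    with (mu * mu * (1 + mu * B)) by (unfold B; ring).
  replace (mu * (mu * (1 + B) * dir_const)) with (mu * mu * (1 + B) * dir_const) by ring.
  apply Rmult_le_compat_r, Rmult_le_compat_l; [assumption|apply Rle_0_sqr|nra].
Qed.

Lemma mu_step_le : mu * (c_step * dir_const) <= nu / 2 /\
                   mu * (c_step * dir_const) <= c_uerr / 2 /\
                   mu * (c_step * dir_const) <= 1.
Proof.
  pose proof (Rmin_l (Rmin (nu / 2) (c_uerr / 2)) 1). pose proof (Rmin_r (Rmin (nu / 2) (c_uerr / 2)) 1).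
  pose proof (Rmin_l (nu / 2) (c_uerr / 2)). pose proof (Rmin_r (nu / 2) (c_uerr / 2)).
  repeat split; lra.
Qed.

Lemma zdev_weight_total_le : zdev_weight + dir_weight * dir_const <= mu * c_base.
Proof.
  pose proof dir_weight_le. destruct mu_step_le as (_ & _ & Hq).
  assert (mu * (mu * c_step * dir_const) <= mu * 1)
    by (apply Rmult_le_compat_l; [lra|]; rewrite Rmult_assoc; exact Hq).
  unfold zdev_weight, c_base. lra.
Qed.

Lemma coef_werr_le :
  1 - mu * nu + mu * c_uerr * (2 * INR K * hsize) + dir_weight * dir_const <= rho.
Proof.
  pose proof dir_weight_le. destruct mu_step_le as (Hq & _ & _).
  assert (E : c_uerr * (2 * INR K * hsize) = nu / 4).
  { unfold c_uerr. pose proof hsize_ge1. pose proof (lt_0_INR K K_pos). field. split; lra. }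
  assert (mu * (mu * c_step * dir_const) <= mu * (nu / 2))
    by (apply Rmult_le_compat_l; [lra|]; rewrite Rmult_assoc; exact Hq).
  pose proof (Rmax_r (1 - (1 - lam) / (2 * INR N)) (1 - mu * nu / 4)). unfold rho.
  rewrite Rmult_assoc, E. lra.
Qed.

Lemma coef_udev_le :
  mu * c_udev * (1 - (1 - lam) / INR N) + mu * c_base / INR N <= rho * (mu * c_udev).
Proof.
  pose proof (lt_0_INR N N_pos). pose proof c_udev_pos.
  assert (E : c_base = c_udev * (1 - lam) / 2) by (unfold c_udev; field; lra).
  replace (mu * c_udev * (1 - (1 - lam) / INR N) + mu * c_base / INR N)
    with ((1 - (1 - lam) / (2 * INR N)) * (mu * c_udev)) by (rewrite E; field; lra).
  apply Rmult_le_compat_r; [nra|apply Rmax_l].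
Qed.

Lemma coef_vlag_le :
  mu * c_udev * (lam * lam * gapinv / INR N)
  + mu * c_vlag * ((1 + / (2 * INR N)) * (1 - / INR N)) + mu * c_base * gapinv / INR N
  <= rho * (mu * c_vlag).
Proof.
  pose proof (lt_0_INR N N_pos). pose proof c_vlag_pos.
  assert (E : c_udev * (lam * lam * gapinv) + gapinv * c_base = c_vlag * lam / 2)
    by (unfold c_vlag; field; lra).
  assert (EN : (1 + / (2 * INR N)) * (1 - / INR N)
               = 1 - / (2 * INR N) - / (2 * INR N) * / INR N) by (field; lra).
  assert (0 < / (2 * INR N) * / INR N)
    by (apply Rmult_lt_0_compat; apply Rinv_0_lt_compat; lra).
  apply Rle_trans with ((1 - (1 - lam) / (2 * INR N)) * (mu * c_vlag)).
  - rewrite EN.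
    replace (mu * c_udev * (lam * lam * gapinv / INR N) + _ + mu * c_base * gapinv / INR N)
      with (mu * (c_udev * (lam * lam * gapinv) + gapinv * c_base) / INR N
            + mu * c_vlag * (1 - / (2 * INR N) - / (2 * INR N) * / INR N)) by (field; lra).
    rewrite E.
    assert (0 <= mu * c_vlag * (/ (2 * INR N) * / INR N))
      by (apply Rmult_le_pos; [nra|lra]).
    match goal with |- ?l <= ?r =>
      assert (l = r - mu * c_vlag * (/ (2 * INR N) * / INR N)) by (field; lra) end.
    lra.
  - apply Rmult_le_compat_r; [nra|apply Rmax_l].
Qed.

Lemma coef_uerr_le :
  mu * c_uerr * (1 - / INR N) + dir_weight * dir_const / INR N <= rho * (mu * c_uerr).
Proof.
  pose proof (lt_0_INR N N_pos). pose proof c_uerr_pos. pose proof dir_weight_le.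
  destruct mu_step_le as (_ & Hq & _).
  assert (dir_weight * dir_const <= mu * (c_uerr / 2))
    by (eapply Rle_trans; [eassumption|]; apply Rmult_le_compat_l; [lra|];
        rewrite Rmult_assoc; exact Hq).
  apply Rle_trans with ((1 - (1 - lam) / (2 * INR N)) * (mu * c_uerr)).
  - assert (dir_weight * dir_const / INR N <= mu * (c_uerr / 2) / INR N)
      by (apply Rmult_le_compat_r; [apply Rlt_le, Rinv_0_lt_compat|]; lra).
    assert (mu * c_uerr * (1 - / INR N) + mu * (c_uerr / 2) / INR N
            <= (1 - (1 - lam) / (2 * INR N)) * (mu * c_uerr)).
    { assert (0 <= mu * c_uerr * lam / (2 * INR N))
        by (apply Rmult_le_pos; [apply Rmult_le_pos; [apply Rmult_le_pos|]; lra
                                |apply Rlt_le, Rinv_0_lt_compat; lra]).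
      replace ((1 - (1 - lam) / (2 * INR N)) * (mu * c_uerr))
        with (mu * c_uerr * (1 - / INR N) + mu * (c_uerr / 2) / INR N
              + mu * c_uerr * lam / (2 * INR N)) by (field; lra).
      lra. }
    lra.
  - apply Rmult_le_compat_r; [nra|apply Rmax_l].
Qed.

Lemma lyap_contraction x : balanced x -> avg N (fun n => lyap (step x n)) <= rho * lyap x.
Proof.
  intros Hb. pose proof (lt_0_INR N N_pos) as HN.
  set (T1 := werr_sq x). set (T2 := udev_total x). set (T3 := vlag_total x).
  set (T4 := uerr_total x). set (Y := avg N (zdev x)). set (X := avg N (dir_sq x)).
  assert (H1 : 0 <= T1) by apply dotf_self_nonneg.
  assert (H2 : 0 <= T2) by (apply fsum_nonneg; intros; apply fsum_sq_nonneg).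
  assert (H3 : 0 <= T3) by (apply fsum_nonneg; intros; apply fsum_sq_nonneg).
  assert (H4 : 0 <= T4) by (apply fsum_nonneg; intros; apply fsum_sq_nonneg).
  assert (HY0 : 0 <= Y) by (apply avg_nonneg; [exact N_pos|]; intros; apply fsum_sq_nonneg).
  set (D := dir_weight * dir_const).
  assert (HX : dir_weight * X <= D * (Y + T1 + / INR N * T4))
    by (unfold D; rewrite Rmult_assoc; apply Rmult_le_compat_l;
        [apply dir_weight_nonneg|apply avg_dir_sq_le]).
  assert (HY : (zdev_weight + D) * Y <= mu * c_base * (/ INR N * (T2 + gapinv * T3))).
  { apply Rle_trans with ((zdev_weight + D) * (/ INR N * (T2 + gapinv * T3))).
    - apply Rmult_le_compat_l; [|now apply avg_zdev_le].
      unfold zdev_weight, D. pose proof c_uerr_pos. pose proof dir_weight_nonneg.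
      pose proof dir_const_nonneg.
      assert (0 <= delta * delta * hsize / nu)
        by (apply Rmult_le_pos; [apply Rmult_le_pos; [apply Rle_0_sqr|pose proof hsize_ge1; lra]
                                |now apply Rlt_le, Rinv_0_lt_compat]).
      assert (0 <= dir_weight * dir_const) by now apply Rmult_le_pos.
      nra.
    - apply Rmult_le_compat_r; [|apply zdev_weight_total_le].
      apply Rmult_le_pos; [now apply Rlt_le, Rinv_0_lt_compat|].
      pose proof gapinv_ge1. nra. }
  eapply Rle_trans; [apply avg_lyap_step_le; exact Hb|]. fold T1 T2 T3 T4 X Y.
  replace (rho * lyap x) with (rho * T1 + rho * (mu * c_udev) * T2 + rho * (mu * c_vlag) * T3
                               + rho * (mu * c_uerr) * T4) by (unfold lyap; fold T1 T2 T3 T4; ring).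
  eapply Rle_trans; [|apply lin_comb4_le; [apply coef_werr_le|apply coef_udev_le
                                         |apply coef_vlag_le|apply coef_uerr_le|..]; assumption].
  fold D. unfold Rdiv. nra.
Qed.

Lemma iter_upd m s p n : (m < p)%nat ->
  vrd_iter N K M A h gam dQ gr mu m (upd s p n) = vrd_iter N K M A h gam dQ gr mu m s.
Proof.
  induction m as [|m IH]; intros Hp; simpl; [reflexivity|].
  rewrite IH by lia. unfold upd. destruct (Nat.eqb_spec (S m) p); [lia|reflexivity].
Qed.

Lemma iter_balanced m s : balanced (vrd_iter N K M A h gam dQ gr mu m s).
Proof.
  induction m as [|m IH]; [apply balanced_init|]. now apply (balanced_step _ _ IH).
Qed.

Lemma expect_lyap_le m :
  expect N m (fun s => lyap (vrd_iter N K M A h gam dQ gr mu m s)) <= rho ^ m * lyap vrd_init.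
Proof.
  induction m as [|m IH]; [simpl; lra|].
  change (expect N (S m) ?F) with (avg N (fun n => expect N m (fun s => F (upd s (S m) n)))).
  rewrite (avg_ext N _ (fun n => expect N m (fun s =>
             lyap (step (vrd_iter N K M A h gam dQ gr mu m s) n)))).
  - rewrite <- expect_avg. eapply Rle_trans.
    + apply expect_le; [exact N_pos|]. intros s. apply lyap_contraction, iter_balanced.
    + rewrite expect_scal. simpl. pose proof rho_pos. rewrite Rmult_assoc.
      now apply Rmult_le_compat_l; [lra|].
  - intros n _. f_equal. apply functional_extensionality. intros s. simpl.
    rewrite iter_upd by lia. unfold upd. now rewrite Nat.eqb_refl.
Qed.

Lemma vrd_expected_error_le i k : (k < K)%nat -> (0 < i)%nat ->
  expect N (i - 1) (fun s => blocksq (M k)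
                       (st_w (vrd_iter N K M A h gam dQ gr mu (i - 1) s) k) (wstar k))
  <= rho ^ i * (lyap vrd_init / rho).
Proof.
  intros Hk Hi. eapply Rle_trans.
  - apply expect_le; [exact N_pos|]. intros s.
    eapply Rle_trans; [apply (dotb_le_dotf K M (werr _) k Hk)|apply werr_sq_le_lyap].
  - eapply Rle_trans; [apply expect_lyap_le|]. pose proof rho_pos.
    replace i with (S (i - 1)) at 2 by lia. simpl. right. field. lra.
Qed.

End VRD.

Lemma small_step_exists a m : 0 <= a -> 0 < m ->
  exists mubar, 0 < mubar /\ forall mu, 0 < mu <= mubar -> mu <= 1 /\ mu * a <= m.
Proof.
  intros Ha Hm. exists (Rmin 1 (m / (a + 1))). split.
  - apply Rmin_pos; [lra|]. apply Rdiv_lt_0_compat; lra.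
  - intros mu [Hmu Hle]. split; [eapply Rle_trans; [exact Hle|apply Rmin_l]|].
    pose proof (Rle_trans _ _ _ Hle (Rmin_r _ _)) as H.
    apply Rmult_le_compat_r with (r := a + 1) in H; [|lra].
    unfold Rdiv in H. rewrite Rmult_assoc, Rinv_l in H by lra. nra.
Qed.

Theorem corollary1
  (N K : nat) (M : nat -> nat)
  (h : nat -> bvec) (gam : nat -> R)
  (Q dQ : R -> R -> R)
  (r : nat -> vec -> R) (gr : nat -> vec -> vec)
  (A : nat -> nat -> R) (E : nat -> nat -> Prop)
  (L delta eta nu lam : R) (wstar : bvec) :
  (0 < N)%nat ->
  (* Q(.;gamma) is differentiable with derivative dQ(.;gamma) *)
  (forall g z, derivable_pt_lim (fun y => Q y g) z (dQ z g)) ->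
  (* (i) *)
  0 < L -> 0 < delta ->
  (forall n w1 w2, (n < N)%nat ->
     normf K M (fun k j => dQ (hTw K M (h n) w1) (gam n) * h n k j
                         - dQ (hTw K M (h n) w2) (gam n) * h n k j)
     <= L * normf K M (bsub w1 w2)) ->
  (forall n z1 z2, (n < N)%nat ->
     Rabs (dQ z1 (gam n) - dQ z2 (gam n)) <= delta * Rabs (z1 - z2)) ->
  (* (ii) r is convex with eta-Lipschitz gradient; gr k = grad r_k *)
  (forall k, (k < K)%nat -> is_block_gradient (M k) (r k) (gr k)) ->
  (forall w1 w2 t, 0 <= t <= 1 ->
     rfull K r (fun k j => t * w1 k j + (1 - t) * w2 k j)
     <= t * rfull K r w1 + (1 - t) * rfull K r w2) ->
  (forall w1 w2,
     normf K M (fun k j => gr k (w1 k) j - gr k (w2 k) j)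
     <= eta * normf K M (bsub w1 w2)) ->
  (* (iii) R is nu-strongly convex, with minimizer wstar *)
  0 < nu ->
  (forall w1 w2,
     dotf K M (bsub (gradR N K M h gam dQ gr w1) (gradR N K M h gam dQ gr w2))
              (bsub w1 w2)
     >= nu * dotf K M (bsub w1 w2) (bsub w1 w2)) ->
  (forall w, Rrisk N K M h gam Q r wstar <= Rrisk N K M h gam Q r w) ->
  (* (iv) graph and combination matrix *)
  strongly_connected K E ->
  (forall l k, (l < K)%nat -> (k < K)%nat -> 0 <= A l k) ->
  (forall l k, (l < K)%nat -> (k < K)%nat -> 0 < A l k -> l = k \/ E l k) ->
  (forall l k, (l < K)%nat -> (k < K)%nat -> A l k = A k l) ->
  (forall l, (l < K)%nat -> fsum K (fun k => A l k) = 1) ->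
  (exists k, (k < K)%nat /\ 0 < A k k) ->
  second_largest_eig_mag K A lam ->
  0 < lam < 1 ->
  exists mubar, 0 < mubar /\
    forall mu, 0 < mu <= mubar ->
      exists C : R, forall k i, (k < K)%nat -> (0 < i)%nat ->
        expect N (i - 1)
          (fun s => blocksq (M k)
                      (st_w (vrd_iter N K M A h gam dQ gr mu (i - 1) s) k)
                      (wstar k))
        <= (Rmax (1 - (1 - lam) / (2 * INR N)) (1 - mu * nu / 4)) ^ i * C.
Proof.
  (* Connectivity, nonnegativity and the positive diagonal of [A] only serve to
     make [lam < 1], which is assumed. *)
  intros HN HQ _ _ _ HdQ Hgr _ Hgrl Hnu Hsc Hmin _ _ _ Hsym Hrow _ Heig Hlam.
  assert (HK : (0 < K)%nat) by (destruct Heig as (V & e & p & _ & Hp & _); lia).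
  pose proof (mix_contract_second_eig K A lam Heig (proj2 Hlam) Hsym Hrow) as Hmix.
  pose proof (gradR_minimizer_eq0 N K M h gam Q dQ r gr HQ Hgr wstar Hmin) as Hgz.
  destruct (small_step_exists (c_step N K M h lam delta nu * dir_const N K M h delta eta)
              (Rmin (Rmin (nu / 2) (c_uerr N K M h nu / 2)) 1)) as (mubar & Hmubar & Hsmall).
  - apply Rmult_le_pos; [pose proof (c_step_ge1 N K M h HK lam Hlam delta nu Hnu); lra|].
    apply dir_const_nonneg.
  - pose proof (c_uerr_pos N K M h HK nu Hnu).
    repeat apply Rmin_pos; lra.
  - exists mubar. split; [exact Hmubar|]. intros mu Hmu.
    destruct (Hsmall mu Hmu) as [Hmu1 Hq].
    exists (lyap N K M h mu lam wstar delta nu vrd_init / rho N mu lam nu).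
    intros k i Hk Hi.
    exact (vrd_expected_error_le N K M h gam dQ gr A mu Hrow HK Hsym lam Hlam Hmix wstar
             delta eta nu HN HdQ Hgrl Hsc Hgz (proj1 Hmu) Hnu Hmu1 Hq i k Hk Hi).
Qed.
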